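(* For $j\ge1$, let $p^{(n)}_j$ be the probability that a random straight line meets $\Pi_n$ in exactly $j$ points, given that it meets $\Pi_n$. Let $$h_n=-\sum_j p^{(n)}_j\log p^{(n)}_j$$ be the associated entropy. Then $$\limsup_{n\to\infty}\frac{h_n}{n}\le \log\left(\frac{2+\sqrt5}{1+\sqrt2}\right).$$
   Context: Work over the alphabet $\{L,R\}$. Let $\bar w$ denote the word $w$ with $L$ and $R$ exchanged, and let $\varepsilon$ be the empty word. Define words $q_n$ by $$q_0=\varepsilon,\qquad q_1=R,\qquad q_n=q_{n-1}q_{n-2}\ \text{ if } n\equiv 2 \pmod 3,\qquad q_n=q_{n-1}\overline{q_{n-2}}\ \text{ if } n\equiv 0,1 \pmod 3\quad (n\ge 2).$$ A word $w=w_1\cdots w_k$ encodes a lattice path in $\mathbb Z^2$ of $k+1$ unit segments: the path starts with a unit step, and after the $i$-th step it turns $90^\circ$ left if $w_i=L$ and $90^\circ$ right if $w_i=R$, then takes the next unit step. For a nonempty word $w$, let $w^{-}$ be $w$ with its last letter removed. The Fibonacci polygon $\Pi_n$ is the path encoded by $\big((q_{3n+1})^4\big)^{-}$. It is a closed non-self-intersecting polygon of $4|q_{3n+1}|$ unit segments. A straight line is written $x\cos\theta+y\sin\theta=\rho$ with $(\theta,\rho)\in[0,\pi)\times\mathbb R$. Probabilities refer to the measure $d\rho\,d\theta$ restricted to the set of lines meeting $\Pi_n$, normalized to a probability measure. Lines meeting $\Pi_n$ in infinitely many points form a null set and are ignored. The convention $0\log 0=0$ is used. *)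

From Stdlib Require Import Reals Lra List ZArith ClassicalEpsilon.
Import ListNotations.
Open Scope R_scope.

Inductive Turn := TL | TR.

Definition flip (c : Turn) : Turn := match c with TL => TR | TR => TL end.
Definition bar (w : list Turn) : list Turn := map flip w.

(* qpair n = (q_n, q_{n+1}) *)
Fixpoint qpair (n : nat) : list Turn * list Turn :=
  match n with
  | O => ([], [TR])
  | S k =>
      let (a, b) := qpair k in
      (b, b ++ (if Nat.eqb ((k + 2) mod 3) 2 then a else bar a))
  end.

Definition q (n : nat) : list Turn := fst (qpair n).

(* headings: 0 = east, 1 = north, 2 = west, 3 = south; left turn = +1 *)
Definition dir (h : nat) : Z * Z :=
  match h mod 4 with
  | 0%nat => (1%Z, 0%Z) | 1%nat => (0%Z, 1%Z) | 2%nat => ((-1)%Z, 0%Z) | _ => (0%Z, (-1)%Z)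
  end.

Definition turn (c : Turn) (h : nat) : nat :=
  match c with TL => ((h + 1) mod 4)%nat | TR => ((h + 3) mod 4)%nat end.

Definition addZ2 (p d : Z * Z) : Z * Z := ((fst p + fst d)%Z, (snd p + snd d)%Z).

Fixpoint walk (w : list Turn) (p : Z * Z) (h : nat) : list (Z * Z) :=
  match w with
  | [] => []
  | c :: w' => let h' := turn c h in let p' := addZ2 p (dir h') in p' :: walk w' p' h'
  end.

(* vertices of the path encoded by w: |w|+2 vertices, |w|+1 unit segments;
   the path starts at the origin with a unit step east *)
Definition vertices (w : list Turn) : list (Z * Z) :=
  (0%Z, 0%Z) :: (1%Z, 0%Z) :: walk w (1%Z, 0%Z) 0%nat.

(** * The Fibonacci polygon Pi_n : path encoded by ((q_{3n+1})^4)^- *)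
Definition piWord (n : nat) : list Turn :=
  let w := q (3 * n + 1) in removelast (w ++ w ++ w ++ w).

Definition piVerts (n : nat) : list (Z * Z) := vertices (piWord n).

Definition nseg (n : nat) : nat := (length (piVerts n) - 1)%nat.

Definition vtx (n i : nat) : R * R :=
  let p := nth i (piVerts n) (0%Z, 0%Z) in (IZR (fst p), IZR (snd p)).

Definition InPoly (n : nat) (z : R * R) : Prop :=
  exists i : nat, (S i < length (piVerts n))%nat /\
    exists s : R, 0 <= s <= 1 /\
      z = (fst (vtx n i) + s * (fst (vtx n (S i)) - fst (vtx n i)),
           snd (vtx n i) + s * (snd (vtx n (S i)) - snd (vtx n i))).

Definition OnLine (th rho : R) (z : R * R) : Prop :=
  fst z * cos th + snd z * sin th = rho.

Definition Hits (n : nat) (th rho : R) (z : R * R) : Prop :=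
  InPoly n z /\ OnLine th rho z.

Definition Meets (n : nat) (th rho : R) : Prop := exists z, Hits n th rho z.

Definition card_eq (S : R * R -> Prop) (j : nat) : Prop :=
  exists l : list (R * R), NoDup l /\ length l = j /\ forall z, In z l <-> S z.

Fixpoint sumR (k : nat) (g : nat -> R) : R :=
  match k with O => 0 | S k' => sumR k' g + g k' end.

Definition Is_RInt (f : R -> R) (a b v : R) : Prop :=
  forall eps, 0 < eps -> exists delta, 0 < delta /\
    forall (k : nat) (x t : nat -> R),
      x 0%nat = a -> x k = b ->
      (forall i, (i < k)%nat -> x i <= t i <= x (S i) /\ x (S i) - x i < delta) ->
      Rabs (sumR k (fun i => f (t i) * (x (S i) - x i)) - v) < eps.

(* the Riemann integral (a value chosen by Hilbert's epsilon; it is the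
   integral whenever the latter exists, which is the case below) *)
Definition RInt (f : R -> R) (a b : R) : R :=
  epsilon (inhabits 0) (fun v => Is_RInt f a b v).

Definition ind (P : Prop) : R :=
  if excluded_middle_informative P then 1 else 0.

(* all points of Pi_n are within distance nseg n of the origin, so every
   line meeting Pi_n has |rho| <= nseg n < rhoMax n *)
Definition rhoMax (n : nat) : R := INR (nseg n) + 1.

(* d rho d theta - measure of a set of lines meeting Pi_n (set given by P) *)
Definition lineMeasure (n : nat) (P : R -> R -> Prop) : R :=
  RInt (fun th => RInt (fun rho => ind (P th rho)) (- rhoMax n) (rhoMax n)) 0 PI.

Definition prob (n j : nat) : R :=
  lineMeasure n (fun th rho => card_eq (Hits n th rho) j) / lineMeasure n (Meets n).

Definition plogp (x : R) : R := if Req_EM_T x 0 then 0 else x * ln x.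

(* h_n = - sum_{j >= 1} p_j log p_j; p_j = 0 for j > nseg n *)
Definition entropy (n : nat) : R :=
  - sumR (nseg n) (fun i => plogp (prob n (S i))).

From Pilot Require Import Defs.
From Stdlib Require Import Reals Lra Lia ZArith List Bool FunctionalExtensionality ClassicalEpsilon.
From Coquelicot Require Import Coquelicot.
Import ListNotations.
Open Scope R_scope.

(** Write [J] for the number of intersection points of a random line with
    [Pi_n], [N = nseg n = 4 |q_(3n+1)|] for the number of sides and [M] for the
    measure of the lines meeting [Pi_n].  The proof has three ingredients.
    - Crofton bound on the mean: a generic line meets a unit segment at most
      once and the lines meeting a unit segment have measure at most [PI], so
      [E J = sum_j j p_j <= PI N / M].
    - Lower bound on [M]: for every direction the lines meeting [Pi_n] cover the
      projection of the segment from the origin to the vertex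
      [Q_n = (P_(n+1), +-(P_n - 1))] (Pell numbers), whence
      [M >= PI P_(n+1) / 4] and [E J <= 4 N / P_(n+1)].
    - Gibbs' inequality against a geometric distribution: a distribution on
      [{1, 2, ...}] with mean at most [mu >= 2] has entropy at most [ln mu + 2].
    Since [N <= 4 phi^(3n+1)] with [phi^3 = 2 + sqrt 5] and
    [P_(n+1) >= (1 + sqrt 2)^n / 2], this gives [h_n <= c + n log((2+sqrt 5)/(1+sqrt 2))]. *)

Lemma sumR_S_l k g : sumR (S k) g = g O + sumR k (fun i => g (S i)).
Proof. induction k; simpl in *. ring. rewrite IHk. ring. Qed.

Lemma sumR_ext k f g : (forall i, (i < k)%nat -> f i = g i) -> sumR k f = sumR k g.
Proof. induction k; simpl; intros H; auto. rewrite IHk, H; auto; intros; apply H; lia. Qed.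



Lemma sumR_scal_r k c f : sumR k (fun i => f i * c) = sumR k f * c.
Proof. induction k; simpl; [ring|]. rewrite IHk. ring. Qed.

Lemma sumR_const k c : sumR k (fun _ => c) = INR k * c.
Proof. induction k; simpl sumR. simpl; ring. rewrite IHk, S_INR. ring. Qed.

Lemma sumR_le k g h : (forall i, (i < k)%nat -> g i <= h i) -> sumR k g <= sumR k h.
Proof.
  induction k; simpl; intros H. lra.
  pose proof (H k ltac:(lia)). pose proof (IHk ltac:(intros; apply H; lia)). lra.
Qed.

Lemma sumR_nonneg k g : (forall i, (i < k)%nat -> 0 <= g i) -> 0 <= sumR k g.
Proof.
  intros H. rewrite <- (Rmult_0_r (INR k)), <- sumR_const. apply sumR_le. exact H.
Qed.

Lemma sumR_ge_term k g i : (forall i, (i < k)%nat -> 0 <= g i) -> (i < k)%nat -> g i <= sumR k g.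
Proof.
  induction k; simpl; intros H Hi. lia.
  destruct (Nat.eq_dec i k).
  - subst. pose proof (sumR_nonneg k g ltac:(intros; apply H; lia)). lra.
  - pose proof (IHk ltac:(intros; apply H; lia) ltac:(lia)). pose proof (H k ltac:(lia)). lra.
Qed.

Lemma sumR_geometric N a : sumR N (fun i => (1 - a) * a ^ i) = 1 - a ^ N.
Proof. induction N; simpl sumR. simpl; ring. rewrite IHN. simpl. ring. Qed.

Lemma length_filter_sumR N f :
  INR (length (filter f (seq 0 N))) = sumR N (fun i => if f i then 1 else 0).
Proof.
  induction N. reflexivity. rewrite seq_S, filter_app, length_app, plus_INR, IHN. cbn [sumR].
  simpl. destruct (f N); simpl; ring.
Qed.

Lemma sumR_indicator N d :
  sumR N (fun i => if Nat.eqb d (S i) then 1 else 0) = if (andb (1 <=? d) (d <=? N))%nat then 1 else 0.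
Proof.
  induction N; cbn [sumR].
  - destruct d; reflexivity.
  - rewrite IHN. destruct (Nat.eqb_spec d (S N)).
    + subst. replace (1 <=? S N)%nat with true by (symmetry; apply Nat.leb_le; lia).
      replace (S N <=? N)%nat with false by (symmetry; apply Nat.leb_gt; lia).
      replace (S N <=? S N)%nat with true by (symmetry; apply Nat.leb_le; lia). simpl. ring.
    + destruct (1 <=? d)%nat; simpl; [|ring].
      destruct (Nat.leb_spec d N); destruct (Nat.leb_spec d (S N)); try ring; lia.
Qed.

Lemma sumR_weighted_indicator N d :
  sumR N (fun i => INR (S i) * (if Nat.eqb d (S i) then 1 else 0)) = if (d <=? N)%nat then INR d else 0.
Proof.
  induction N; cbn [sumR].
  - destruct d; simpl; auto.
  - rewrite IHN. destruct (Nat.eqb_spec d (S N)).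
    + subst. replace (S N <=? N)%nat with false by (symmetry; apply Nat.leb_gt; lia).
      replace (S N <=? S N)%nat with true by (symmetry; apply Nat.leb_le; lia). ring.
    + destruct (Nat.leb_spec d N); destruct (Nat.leb_spec d (S N)); try ring; try lia.
Qed.

(** * The Riemann integral of [Defs] agrees with Coquelicot's *)

Fixpoint tagged_subdiv (x t : nat -> R) (j m : nat) : @SF_seq R :=
  match m with
  | O => SF_nil (x j)
  | S m' => SF_cons (x j, t j) (tagged_subdiv x t (S j) m')
  end.

Lemma tagged_subdiv_last x t j m :
  seq.last (SF_h (tagged_subdiv x t j m)) (SF_lx (tagged_subdiv x t j m)) = x (j + m)%nat.
Proof.
  revert j; induction m; intros j.
  - simpl. rewrite Nat.add_0_r; reflexivity.
  - simpl tagged_subdiv. rewrite SF_lx_cons. simpl fst. simpl seq.last.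
    rewrite <- Nat.add_succ_comm. rewrite <- IHm. destruct m; reflexivity.
Qed.

Lemma tagged_subdiv_sum (f : R -> R) x t j m :
  Riemann_sum f (tagged_subdiv x t j m) =
  sumR m (fun i => f (t (j+i)%nat) * (x (S (j+i)) - x (j+i)%nat)).
Proof.
  revert j; induction m; intros j.
  - reflexivity.
  - simpl tagged_subdiv. rewrite Riemann_sum_cons, IHm, sumR_S_l.
    replace (SF_h (tagged_subdiv x t (S j) m)) with (x (S j)) by (destruct m; reflexivity).
    rewrite Nat.add_0_r. simpl fst; simpl snd. unfold plus, scal; simpl. unfold mult; simpl.
    f_equal. ring. apply f_equal. apply functional_extensionality; intro i.
    replace (j + S i)%nat with (S j + i)%nat by lia. reflexivity.
Qed.

Lemma tagged_subdiv_step x t j m d : 0 < d ->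
  (forall i, (i < m)%nat -> Rabs (x (S (j+i)) - x (j+i)%nat) < d) ->
  seq_step (SF_lx (tagged_subdiv x t j m)) < d.
Proof.
  revert j; induction m; intros j Hd H.
  - unfold seq_step. simpl. exact Hd.
  - simpl tagged_subdiv. rewrite SF_lx_cons. simpl fst.
    assert (H0 := H O ltac:(lia)). rewrite Nat.add_0_r in H0.
    assert (IH : seq_step (SF_lx (tagged_subdiv x t (S j) m)) < d).
    { apply IHm; auto. intros i Hi. specialize (H (S i) ltac:(lia)).
      replace (j + S i)%nat with (S j + i)%nat in H by lia. exact H. }
    destruct m as [|m].
    + unfold seq_step; simpl. apply Rmax_lub_lt; [exact H0|exact Hd].
    + simpl tagged_subdiv in *. rewrite SF_lx_cons in *. simpl fst in *.
      unfold seq_step in *. simpl in *. apply Rmax_lub_lt; [exact H0|exact IH].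
Qed.

Lemma tagged_subdiv_pointed x t j m :
  (forall i, (i < m)%nat -> x (j+i)%nat <= t (j+i)%nat <= x (S (j+i))) ->
  pointed_subdiv (tagged_subdiv x t j m).
Proof.
  revert j; induction m; intros j H.
  - intros i Hi. simpl in Hi. unfold SF_size in Hi. simpl in Hi. lia.
  - simpl tagged_subdiv. intros i Hi. rewrite SF_size_cons in Hi.
    rewrite SF_lx_cons, SF_ly_cons. destruct i.
    + specialize (H O ltac:(lia)). rewrite Nat.add_0_r in H. destruct m; exact H.
    + simpl seq.nth. apply IHm; [|lia]. intros i' Hi'. specialize (H (S i') ltac:(lia)).
      replace (j + S i')%nat with (S j + i')%nat in H by lia. exact H.
Qed.

(* Coquelicot's integral is the limit of the Riemann sums along the mesh filter,
   so it is in particular an integral in the sense of [Defs.Is_RInt] *)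
Lemma is_RInt_Is_RInt (f : R -> R) a b v : a < b -> is_RInt f a b v -> Is_RInt f a b v.
Proof.
  intros Hab H eps Heps.
  destruct (proj1 (filterlim_locally _ v) H (mkposreal eps Heps)) as [d Hd]. simpl in Hd.
  exists d. split. apply cond_pos.
  intros k x t H0 Hk Ht.
  assert (Hp := Hd (tagged_subdiv x t 0 k)).
  rewrite tagged_subdiv_sum in Hp. simpl in Hp.
  assert (Hs : seq_step (SF_lx (tagged_subdiv x t 0 k)) < d).
  { apply tagged_subdiv_step. apply cond_pos. intros i Hi. simpl.
    destruct (Ht i Hi) as [[A B] C]. rewrite Rabs_right; lra. }
  specialize (Hp Hs).
  assert (Hc : pointed_subdiv (tagged_subdiv x t 0 k) /\ SF_h (tagged_subdiv x t 0 k) = Rmin a b /\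
       seq.last (SF_h (tagged_subdiv x t 0 k)) (SF_lx (tagged_subdiv x t 0 k)) = Rmax a b).
  { split. apply tagged_subdiv_pointed. intros i Hi; simpl; apply Ht; auto.
    split. rewrite Rmin_left by lra. destruct k; exact H0.
    rewrite tagged_subdiv_last, Rmax_right by lra. exact Hk. }
  specialize (Hp Hc).
  unfold ball in Hp; simpl in Hp. unfold AbsRing_ball in Hp.
  unfold abs, minus, plus, opp, scal in Hp; simpl in Hp.
  rewrite sign_eq_1 in Hp by lra. unfold mult in Hp; simpl in Hp. rewrite Rmult_1_l in Hp.
  exact Hp.
Qed.

(* the value of a [Defs] Riemann integral is unique: compare both values with
   the Riemann sum of a uniform subdivision finer than both moduli *)
Lemma Is_RInt_unique f a b v w : a < b -> Is_RInt f a b v -> Is_RInt f a b w -> v = w.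
Proof.
  intros Hab Hv Hw. destruct (Req_dec v w) as [E|E]; auto. exfalso.
  set (e := Rabs (v - w) / 2).
  assert (He : 0 < e).
  { unfold e. assert (v - w <> 0) by (intro; apply E; lra). pose proof (Rabs_pos_lt _ H). lra. }
  destruct (Hv e He) as [d1 [Hd1 H1]]. destruct (Hw e He) as [d2 [Hd2 H2]].
  set (d := Rmin d1 d2).
  assert (Hd : 0 < d) by (apply Rmin_pos; auto).
  destruct (archimed ((b - a) / d)) as [Ha _].
  set (k := Z.to_nat (up ((b - a) / d))).
  assert (Hk : (b - a) / d < INR k).
  { unfold k. rewrite INR_IZR_INZ, Z2Nat.id. lra.
    apply le_IZR. assert (0 <= (b - a) / d) by (apply Rdiv_le_0_compat; lra). lra. }
  assert (Hk0 : 0 < INR k). { assert (0 < (b - a) / d) by (apply Rdiv_lt_0_compat; lra). lra. }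
  set (x := fun i => a + INR i * ((b - a) / INR k)).
  assert (Hstep : (b - a) / INR k < d).
  { apply (Rmult_lt_reg_r (INR k)); auto. unfold Rdiv. rewrite Rmult_assoc, Rinv_l by lra.
    apply (Rmult_lt_reg_r (/ d)). apply Rinv_0_lt_compat; auto.
    rewrite Rmult_1_r, (Rmult_comm d), Rmult_assoc, Rinv_r by lra. lra. }
  assert (Hpos : 0 < (b - a) / INR k) by (apply Rdiv_lt_0_compat; lra).
  assert (X0 : x O = a) by (unfold x; simpl; ring).
  assert (Xk : x k = b) by (unfold x; field; lra).
  assert (Ht : forall d', d <= d' -> forall i, (i < k)%nat ->
                 x i <= x i <= x (S i) /\ x (S i) - x i < d').
  { intros d' Hd' i Hi. unfold x. rewrite S_INR. split; [split|]; lra. }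
  specialize (H1 k x x X0 Xk (Ht d1 (Rmin_l _ _))).
  specialize (H2 k x x X0 Xk (Ht d2 (Rmin_r _ _))).
  set (Sk := sumR k _) in H1, H2.
  assert (Rabs (v - w) <= Rabs (Sk - v) + Rabs (Sk - w)).
  { replace (v - w) with ((Sk - w) + - (Sk - v)) by ring.
    eapply Rle_trans; [apply Rabs_triang|]. rewrite Rabs_Ropp. lra. }
  unfold e in *. lra.
Qed.

Lemma Defs_RInt_eq f a b v : a < b -> is_RInt f a b v -> Defs.RInt f a b = v.
Proof.
  intros Hab H. apply is_RInt_Is_RInt in H; auto. unfold Defs.RInt.
  apply (Is_RInt_unique f a b); auto. apply epsilon_spec. exists v; exact H.
Qed.

(* Coquelicot's linearity lemmas, stated with [Rplus]/[Rmult] so that they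
   unify with real-valued integrands *)
Lemma is_RInt_Rplus (f g : R -> R) a b lf lg : is_RInt f a b lf -> is_RInt g a b lg ->
  is_RInt (fun x => f x + g x) a b (lf + lg).
Proof. intros. apply (is_RInt_plus f g a b lf lg); auto. Qed.

Lemma is_RInt_Rminus (f g : R -> R) a b lf lg : is_RInt f a b lf -> is_RInt g a b lg ->
  is_RInt (fun x => f x - g x) a b (lf - lg).
Proof. intros. apply (is_RInt_minus f g a b lf lg); auto. Qed.

Lemma is_RInt_Rmult_l (f : R -> R) a b k lf : is_RInt f a b lf ->
  is_RInt (fun x => k * f x) a b (k * lf).
Proof. intros. apply (is_RInt_scal f a b k lf); auto. Qed.

Lemma is_RInt_Rconst a b (v : R) : is_RInt (fun _ => v) a b ((b - a) * v).
Proof. apply (is_RInt_const a b v). Qed.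

Lemma is_RInt_sumR (g : nat -> R -> R) (v : nat -> R) a b k :
  (forall i, (i < k)%nat -> is_RInt (g i) a b (v i)) ->
  is_RInt (fun x => sumR k (fun i => g i x)) a b (sumR k v).
Proof.
  induction k; intros H; simpl.
  - pose proof (is_RInt_Rconst a b 0) as H0. rewrite Rmult_0_r in H0. exact H0.
  - apply is_RInt_Rplus. apply IHk; intros; apply H; lia. apply H; lia.
Qed.

Lemma is_RInt_ext_open (f g : R -> R) a b l : a <= b -> (forall x, a < x < b -> f x = g x) ->
  is_RInt f a b l -> is_RInt g a b l.
Proof. intros Hab H. apply is_RInt_ext. rewrite Rmin_left, Rmax_right by lra. auto. Qed.

Lemma is_RInt_ext_but_one (f g : R -> R) a b l p : a <= b -> is_RInt g a b l ->
  (forall x, x <> p -> f x = g x) -> is_RInt f a b l.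
Proof.
  intros Hab Hg H.
  destruct (Rlt_dec a p) as [H1|H1]; [destruct (Rlt_dec p b) as [H2|H2]|].
  - assert (Eg : ex_RInt g a b) by (exists l; auto).
    assert (E1 : ex_RInt g a p) by (apply (ex_RInt_Chasles_1 g a p b); auto; lra).
    assert (E2 : ex_RInt g p b) by (apply (ex_RInt_Chasles_2 g a p b); auto; lra).
    assert (Hl : l = RInt g a p + RInt g p b).
    { rewrite <- (is_RInt_unique g a b l Hg). symmetry. apply (RInt_Chasles g a p b); auto. }
    rewrite Hl. apply (is_RInt_Chasles f a p b).
    + apply (is_RInt_ext_open g f); try lra. intros x Hx. symmetry; apply H; lra.
      apply (RInt_correct g); auto.
    + apply (is_RInt_ext_open g f); try lra. intros x Hx. symmetry; apply H; lra.
      apply (RInt_correct g); auto.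
  - apply (is_RInt_ext_open g f); auto. intros x Hx; symmetry; apply H; lra.
  - apply (is_RInt_ext_open g f); auto. intros x Hx; symmetry; apply H; lra.
Qed.

Lemma is_RInt_ext_but_finite (f g : R -> R) a b l (ps : list R) : a <= b -> is_RInt g a b l ->
  (forall x, ~ In x ps -> f x = g x) -> is_RInt f a b l.
Proof.
  revert g. induction ps as [|p ps IH]; intros g Hab Hg H.
  - apply (is_RInt_ext_open g f); auto. intros x _. symmetry; apply H; auto.
  - set (g' := fun x => if Req_EM_T x p then f x else g x).
    apply (IH g'); auto.
    + apply (is_RInt_ext_but_one g' g a b l p); auto. intros x Hx. unfold g'.
      destruct (Req_EM_T x p); [contradiction|reflexivity].
    + intros x Hx. unfold g'. destruct (Req_EM_T x p) as [E|E]; auto.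
      apply H. simpl. intros [E2|E2]; [apply E; auto|contradiction].
Qed.

Lemma is_RInt_indicator (f : R -> R) a b u v : a <= u -> u <= v -> v <= b ->
  (forall x, u < x < v -> f x = 1) -> (forall x, a < x < u -> f x = 0) ->
  (forall x, v < x < b -> f x = 0) ->
  is_RInt f a b (v - u).
Proof.
  intros H1 H2 H3 Hm Hl Hr.
  replace (v - u) with ((u - a) * 0 + ((v - u) * 1 + (b - v) * 0)) by ring.
  apply (is_RInt_Chasles f a u b); [|apply (is_RInt_Chasles f u v b)].
  - apply (is_RInt_ext_open (fun _ => 0)); auto. intros; symmetry; auto. apply is_RInt_Rconst.
  - apply (is_RInt_ext_open (fun _ => 1)); auto. intros; symmetry; auto. apply is_RInt_Rconst.
  - apply (is_RInt_ext_open (fun _ => 0)); auto. intros; symmetry; auto. apply is_RInt_Rconst.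
Qed.

Lemma is_RInt_le_values (f g : R -> R) a b lf lg : a <= b -> is_RInt f a b lf -> is_RInt g a b lg ->
  (forall x, a < x < b -> f x <= g x) -> lf <= lg.
Proof.
  intros Hab Hf Hg H. rewrite <- (is_RInt_unique f a b lf Hf), <- (is_RInt_unique g a b lg Hg).
  apply RInt_le; auto. exists lf; auto. exists lg; auto.
Qed.

Definition inside (a b : R) (c : R) : bool :=
  if Rlt_dec a c then if Rlt_dec c b then true else false else false.

Lemma inside_true a b x : inside a b x = true <-> a < x < b.
Proof.
  unfold inside. destruct (Rlt_dec a x); destruct (Rlt_dec x b); split; intros;
    try lra; try discriminate; auto.
Qed.

Definition stepfun (Bs : list R) (f : R -> R) (a b : R) : Prop :=
  forall x y, a <= x <= b -> a <= y <= b ->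
    (forall c, In c Bs -> ~ (Rmin x y <= c <= Rmax x y)) -> f x = f y.

Lemma filter_length_lt {A} (P Q : A -> bool) (l : list A) c :
  (forall x, P x = true -> Q x = true) -> In c l -> P c = false -> Q c = true ->
  (length (filter P l) < length (filter Q l))%nat.
Proof.
  intros HPQ. induction l as [|y l IH]; intros Hc HP HQ. destruct Hc.
  assert (Hle : forall l, (length (filter P l) <= length (filter Q l))%nat).
  { induction l0; simpl; auto. destruct (P a) eqn:E1. rewrite (HPQ _ E1). simpl; lia.
    destruct (Q a); simpl; lia. }
  simpl. destruct Hc as [->|Hc].
  - rewrite HP, HQ. simpl. specialize (Hle l). lia.
  - specialize (IH Hc HP HQ). destruct (P y) eqn:E1. rewrite (HPQ _ E1). simpl; lia.
    destruct (Q y); simpl; lia.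
Qed.

(* step functions are integrable: split at a breakpoint inside (a,b) and
   induct on the number of breakpoints inside the interval *)
Lemma ex_RInt_stepfun Bs f a b : a <= b -> stepfun Bs f a b -> ex_RInt f a b.
Proof.
  remember (length (filter (inside a b) Bs)) as n eqn:Hn. revert a b Hn.
  induction n as [n IH] using lt_wf_ind. intros a b Hn Hab Hs.
  destruct (existsb (inside a b) Bs) eqn:Ex.
  - apply existsb_exists in Ex. destruct Ex as [c [Hc Hin]]. apply inside_true in Hin.
    assert (Hsub : forall u v, a <= u -> v <= b -> (forall x, inside u v x = true -> inside a b x = true)).
    { intros u v Hu Hv x. rewrite !inside_true. lra. }
    apply (ex_RInt_Chasles f a c b).
    + apply (IH (length (filter (inside a c) Bs))); auto; try lra.
      * rewrite Hn. apply (filter_length_lt _ _ _ c); auto; try (apply inside_true; lra).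
        apply Hsub; lra. apply Bool.not_true_iff_false. rewrite inside_true. lra.
      * intros x y Hx Hy H. apply Hs; auto; lra.
    + apply (IH (length (filter (inside c b) Bs))); auto; try lra.
      * rewrite Hn. apply (filter_length_lt _ _ _ c); auto; try (apply inside_true; lra).
        apply Hsub; lra. apply Bool.not_true_iff_false. rewrite inside_true. lra.
      * intros x y Hx Hy H. apply Hs; auto; lra.
  - destruct (Req_dec a b) as [<-|Hne]. apply ex_RInt_point.
    set (m := (a + b) / 2).
    exists ((b - a) * f m). apply (is_RInt_ext_open (fun _ => f m)); [lra| |apply is_RInt_Rconst].
    intros x Hx. symmetry. apply Hs; try (unfold m; lra).
    intros c Hc Hc2. assert (inside a b c = true).
    { apply inside_true. unfold Rmin, Rmax, m in *. destruct (Rle_dec x ((a + b) / 2)); lra. }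
    assert (existsb (inside a b) Bs = true) by (apply existsb_exists; eauto). congruence.
Qed.

(** * Counting distinct points through keys

    The intersection points of a generic line with the polygon are indexed by
    the sides it crosses; two crossed sides give the same point iff they are
    the same unit segment of the lattice, which is identified by a key. *)

(* a unit lattice segment: its lower-left endpoint and whether it is horizontal *)
Definition Key := ((Z * Z) * bool)%type.

Definition keqb (a b : Key) : bool :=
  Z.eqb (fst (fst a)) (fst (fst b)) && Z.eqb (snd (fst a)) (snd (fst b)) && Bool.eqb (snd a) (snd b).

Lemma keqb_spec a b : keqb a b = true <-> a = b.
Proof.
  destruct a as [[a1 a2] a3], b as [[b1 b2] b3]. unfold keqb; simpl.
  rewrite !andb_true_iff, !Z.eqb_eq, Bool.eqb_true_iff. split.
  intros [[-> ->] ->]; auto. intro E; inversion E; auto.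
Qed.

Section DistinctKeys.
Variable key : nat -> Key.
Variable pt : nat -> R * R.

Fixpoint dcount (C : list nat) : nat :=
  match C with
  | [] => O
  | i :: C' => if existsb (fun k => keqb (key i) (key k)) C' then dcount C' else S (dcount C')
  end.

Fixpoint dbuild (C : list nat) : list (R * R) :=
  match C with
  | [] => []
  | i :: C' => if existsb (fun k => keqb (key i) (key k)) C' then dbuild C' else pt i :: dbuild C'
  end.

Lemma dbuild_length C : length (dbuild C) = dcount C.
Proof. induction C; simpl; auto. destruct existsb; simpl; auto. Qed.

Lemma dbuild_In C : (forall i k, In i C -> In k C -> key i = key k -> pt i = pt k) ->
  forall z, In z (dbuild C) <-> exists i, In i C /\ z = pt i.
Proof.
  induction C as [|i C IH]; intros H z; simpl. split. tauto. intros [i [[] _]].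
  assert (IH' := IH (fun a b Ha Hb => H a b (or_intror Ha) (or_intror Hb)) z).
  destruct (existsb _ C) eqn:E.
  - rewrite IH'. split. intros [k [Hk ->]]; eauto.
    intros [k [[<-|Hk] ->]]; [|eauto].
    apply existsb_exists in E. destruct E as [k [Hk Hkey]]. apply keqb_spec in Hkey.
    exists k. split; auto. apply H; simpl; auto.
  - simpl. rewrite IH'. split.
    intros [<-|[k [Hk ->]]]; eauto.
    intros [k [[<-|Hk] ->]]; eauto.
Qed.

Lemma dbuild_NoDup C : (forall i k, In i C -> In k C -> pt i = pt k <-> key i = key k) ->
  NoDup (dbuild C).
Proof.
  induction C as [|i C IH]; intros H; simpl. constructor.
  assert (IH' := IH (fun a b Ha Hb => H a b (or_intror Ha) (or_intror Hb))).
  destruct (existsb _ C) eqn:E; auto.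
  constructor; auto. rewrite dbuild_In by (intros; apply H; simpl; auto).
  intros [k [Hk Hp]]. assert (key i = key k) by (apply H; simpl; auto).
  assert (existsb (fun k0 => keqb (key i) (key k0)) C = true).
  { apply existsb_exists. exists k. split; auto. apply keqb_spec; auto. }
  congruence.
Qed.

Lemma card_eq_unique (S : R * R -> Prop) j j' : card_eq S j -> card_eq S j' -> j = j'.
Proof.
  intros [l [Hl [Hlen Hin]]] [l' [Hl' [Hlen' Hin']]].
  assert (length l <= length l')%nat.
  { apply NoDup_incl_length; auto. intros z Hz. apply Hin', Hin, Hz. }
  assert (length l' <= length l)%nat.
  { apply NoDup_incl_length; auto. intros z Hz. apply Hin, Hin', Hz. }
  lia.
Qed.

Lemma card_eq_dcount (S : R * R -> Prop) C :
  (forall i k, In i C -> In k C -> pt i = pt k <-> key i = key k) ->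
  (forall z, S z <-> exists i, In i C /\ z = pt i) ->
  forall j, card_eq S j <-> j = dcount C.
Proof.
  intros H HS j.
  assert (Hc : card_eq S (dcount C)).
  { exists (dbuild C). split; [|split].
    - apply dbuild_NoDup; auto.
    - apply dbuild_length.
    - intros z. rewrite HS. apply dbuild_In. intros; apply H; auto. }
  split. intros Hj. eapply card_eq_unique; eauto. intros ->; auto.
Qed.

Lemma dcount_le C : (dcount C <= length C)%nat.
Proof. induction C; simpl; auto. destruct existsb; lia. Qed.

Lemma dcount_zero C : dcount C = 0%nat -> C = [].
Proof.
  induction C as [|i C IH]; auto. simpl. destruct existsb eqn:E; [|discriminate].
  intros H. specialize (IH H). subst C. discriminate.
Qed.
End DistinctKeys.

(** * The Fibonacci words and the endpoints of their paths *)

Lemma q_rec k : q (S (S k)) = q (S k) ++ (if Nat.eqb ((k + 2) mod 3) 2 then q k else bar (q k)).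
Proof.
  assert (Hsnd : forall k, snd (qpair k) = q (S k)).
  { intros j. unfold q. simpl. destruct (qpair j). reflexivity. }
  unfold q at 1. simpl. destruct (qpair k) as [a b] eqn:E. simpl.
  unfold q. rewrite E. simpl.
  replace b with (snd (qpair k)) by (rewrite E; reflexivity). rewrite Hsnd. reflexivity.
Qed.

Fixpoint fib (k : nat) : nat :=
  match k with O => O | S k' => match k' with O => 1%nat | S k'' => (fib k' + fib k'')%nat end end.

Lemma q_length k : length (q k) = fib k.
Proof.
  induction k as [k IH] using lt_wf_ind. destruct k as [|[|k]]; try reflexivity.
  rewrite q_rec, length_app.
  destruct (Nat.eqb _ _); unfold bar; try rewrite length_map; rewrite !IH by lia; reflexivity.
Qed.

Lemma q_3m2 m : q (3 * m + 2) = q (3 * m + 1) ++ q (3 * m).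
Proof.
  replace (3 * m + 2)%nat with (S (S (3 * m))) by lia. rewrite q_rec.
  replace ((3 * m + 2) mod 3)%nat with 2%nat. simpl. f_equal; f_equal; lia.
  rewrite Nat.add_comm, Nat.mul_comm, Nat.Div0.mod_add by lia. reflexivity.
Qed.

Lemma q_3m3 m : q (3 * m + 3) = q (3 * m + 2) ++ bar (q (3 * m + 1)).
Proof.
  replace (3 * m + 3)%nat with (S (S (3 * m + 1))) by lia. rewrite q_rec.
  replace ((3 * m + 1 + 2) mod 3)%nat with 0%nat. simpl. f_equal; f_equal; lia.
  replace (3 * m + 1 + 2)%nat with (0 + (m + 1) * 3)%nat by lia. rewrite Nat.Div0.mod_add by lia. reflexivity.
Qed.

Lemma q_3m4 m : q (3 * m + 4) = q (3 * m + 3) ++ bar (q (3 * m + 2)).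
Proof.
  replace (3 * m + 4)%nat with (S (S (3 * m + 2))) by lia. rewrite q_rec.
  replace ((3 * m + 2 + 2) mod 3)%nat with 1%nat. simpl. f_equal; f_equal; lia.
  replace (3 * m + 2 + 2)%nat with (1 + (m + 1) * 3)%nat by lia. rewrite Nat.Div0.mod_add by lia. reflexivity.
Qed.

(** Rotations and reflections of paths.  Headings are taken mod 4; rotating the
    initial heading by [h] rotates the whole path, exchanging L and R reflects
    it in the horizontal axis. *)

Definition rot (h : nat) (z : Z * Z) : Z * Z :=
  match h mod 4 with
  | 0%nat => z
  | 1%nat => ((- snd z)%Z, fst z)
  | 2%nat => ((- fst z)%Z, (- snd z)%Z)
  | _ => (snd z, (- fst z)%Z)
  end.

Definition cnj (z : Z * Z) : Z * Z := (fst z, (- snd z)%Z).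

(* the heading opposite to [k] under reflection *)
Definition negh (k : nat) : nat := ((4 - k mod 4) mod 4)%nat.

Lemma mod4_cases k : k mod 4 = 0%nat \/ k mod 4 = 1%nat \/ k mod 4 = 2%nat \/ k mod 4 = 3%nat.
Proof. pose proof (Nat.mod_upper_bound k 4). lia. Qed.

Lemma dir_mod k : dir (k mod 4) = dir k.
Proof. unfold dir. rewrite Nat.Div0.mod_mod by lia. reflexivity. Qed.

Lemma dir_rot h k : dir (h + k) = rot h (dir k).
Proof.
  unfold dir, rot. rewrite Nat.Div0.add_mod by lia.
  destruct (mod4_cases h) as [E|[E|[E|E]]]; destruct (mod4_cases k) as [F|[F|[F|F]]];
  rewrite E, F; reflexivity.
Qed.

Lemma turn_add c h k : turn c ((h + k) mod 4) = ((h + turn c k) mod 4)%nat.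
Proof.
  destruct c; unfold turn; rewrite Nat.Div0.add_mod_idemp_l, Nat.Div0.add_mod_idemp_r by lia; f_equal; lia.
Qed.

Lemma rot_add h z d : rot h (addZ2 z d) = addZ2 (rot h z) (rot h d).
Proof. unfold rot, addZ2. destruct (mod4_cases h) as [E|[E|[E|E]]]; rewrite E; simpl; f_equal; lia. Qed.

Lemma addZ2_assoc a b c : addZ2 (addZ2 a b) c = addZ2 a (addZ2 b c).
Proof. unfold addZ2; simpl; f_equal; lia. Qed.

Lemma flip_turn c k : turn (flip c) (negh k) = negh (turn c k).
Proof.
  destruct c; cbn [flip]; unfold turn, negh; rewrite (Nat.Div0.add_mod k) by lia;
  destruct (mod4_cases k) as [E|[E|[E|E]]]; rewrite E; reflexivity.
Qed.

Lemma dir_negh k : dir (negh k) = cnj (dir k).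
Proof. unfold negh, dir, cnj. destruct (mod4_cases k) as [E|[E|[E|E]]]; rewrite E; reflexivity. Qed.

Lemma cnj_add a b : cnj (addZ2 a b) = addZ2 (cnj a) (cnj b).
Proof. unfold cnj, addZ2; simpl; f_equal; lia. Qed.

Fixpoint fin (w : list Turn) (p : Z * Z) (h : nat) : (Z * Z) * nat :=
  match w with [] => (p, h) | c :: w' => let h' := turn c h in fin w' (addZ2 p (dir h')) h' end.

Lemma fin_app u v p h : fin (u ++ v) p h = fin v (fst (fin u p h)) (snd (fin u p h)).
Proof. revert p h; induction u; intros; simpl; auto. Qed.

Lemma fin_rot w : forall p z h k,
  fin w (addZ2 p (rot h z)) ((h + k) mod 4) =
  (addZ2 p (rot h (fst (fin w z k))), ((h + snd (fin w z k)) mod 4)%nat).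
Proof.
  induction w as [|c w IH]; intros p z h k; cbn [fin]. reflexivity.
  rewrite turn_add, dir_mod, dir_rot, addZ2_assoc, <- rot_add. apply IH.
Qed.

Lemma fin_bar w : forall z k,
  fin (bar w) (cnj z) (negh k) = (cnj (fst (fin w z k)), negh (snd (fin w z k))).
Proof.
  induction w as [|c w IH]; intros z k; cbn [fin bar map]. reflexivity.
  fold (bar w). rewrite flip_turn, dir_negh, <- cnj_add. apply IH.
Qed.

Definition Dw (w : list Turn) : Z * Z := fst (fin w (0%Z, 0%Z) 0).
Definition Hw (w : list Turn) : nat := snd (fin w (0%Z, 0%Z) 0).

Lemma fin_gen w p h : (h < 4)%nat -> fin w p h = (addZ2 p (rot h (Dw w)), ((h + Hw w) mod 4)%nat).
Proof.
  intros Hh. pose proof (fin_rot w p (0%Z, 0%Z) h 0) as E.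
  replace (addZ2 p (rot h (0%Z, 0%Z))) with p in E.
  2:{ unfold rot, addZ2. destruct (mod4_cases h) as [F|[F|[F|F]]]; rewrite F; simpl;
      destruct p; simpl; f_equal; lia. }
  rewrite Nat.add_0_r, Nat.mod_small in E by lia. rewrite E. reflexivity.
Qed.

Lemma Hw_lt w : (Hw w < 4)%nat.
Proof.
  assert (H : forall p h, (h < 4)%nat -> (snd (fin w p h) < 4)%nat).
  { induction w as [|c w IH]; intros p h Hh; cbn [fin]; auto.
    apply IH. destruct c; unfold turn; apply Nat.mod_upper_bound; lia. }
  apply H. lia.
Qed.

Lemma Dw_app u v : Dw (u ++ v) = addZ2 (Dw u) (rot (Hw u) (Dw v)).
Proof. unfold Dw at 1. rewrite fin_app, (fin_gen v). reflexivity. apply Hw_lt. Qed.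

Lemma Hw_app u v : Hw (u ++ v) = ((Hw u + Hw v) mod 4)%nat.
Proof. unfold Hw at 1. rewrite fin_app, (fin_gen v). reflexivity. apply Hw_lt. Qed.

Lemma Dw_bar w : Dw (bar w) = cnj (Dw w).
Proof. unfold Dw. pose proof (fin_bar w (0%Z, 0%Z) 0) as E. exact (f_equal fst E). Qed.

Lemma Hw_bar w : Hw (bar w) = negh (Hw w).
Proof. unfold Hw. pose proof (fin_bar w (0%Z, 0%Z) 0) as E. exact (f_equal snd E). Qed.

Fixpoint pell (k : nat) : Z :=
  match k with O => 0%Z | S k' => match k' with O => 1%Z | S k'' => (2 * pell k' + pell k'')%Z end end.

Definition sgn (m : nat) : Z := if Nat.even m then 1%Z else (-1)%Z.

Lemma q_endpoints m :
  Dw (q (3 * m)) = (pell m, (sgn m * pell m)%Z) /\ Hw (q (3 * m)) = 0%nat /\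
  Dw (q (3 * m + 1)) = ((pell (S m) - 1)%Z, (sgn m * (pell m - 1))%Z) /\
  Hw (q (3 * m + 1)) = (if Nat.even m then 3 else 1)%nat.
Proof.
  induction m as [|m IH].
  - repeat split; reflexivity.
  - destruct IH as [D0 [H0 [D1 H1]]].
    replace (3 * S m + 1)%nat with (3 * m + 4)%nat by lia.
    replace (3 * S m)%nat with (3 * m + 3)%nat by lia.
    rewrite q_3m4, Dw_app, Hw_app, Dw_bar, Hw_bar, q_3m3, Dw_app, Hw_app, Dw_bar, Hw_bar,
      q_3m2, !Dw_app, !Hw_app, D1, H1, D0, H0.
    unfold sgn. rewrite Nat.even_succ, <- Nat.negb_even.
    change (pell (S (S m))) with (2 * pell (S m) + pell m)%Z.
    destruct (Nat.even m); unfold addZ2, cnj, rot, negh;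
      cbn -[pell Z.mul Z.add Z.sub Z.opp]; repeat split; f_equal; lia.
Qed.

Lemma walk_app u v p h : walk (u ++ v) p h = walk u p h ++ walk v (fst (fin u p h)) (snd (fin u p h)).
Proof. revert p h; induction u; intros; simpl; auto. f_equal. apply IHu. Qed.

Lemma walk_length w p h : length (walk w p h) = length w.
Proof. revert p h; induction w; intros; simpl; auto. Qed.

Lemma walk_last u p h d : u <> [] -> nth (length u - 1) (walk u p h) d = fst (fin u p h).
Proof.
  revert p h; induction u as [|c u IH]; intros p h Hu. congruence.
  destruct u as [|c' u]. reflexivity.
  cbn [walk fin length].
  replace (S (S (length u)) - 1)%nat with (S (length (c' :: u) - 1)) by (simpl; lia).
  cbn [nth]. apply IH. congruence.
Qed.

Lemma fib_pos k : (1 <= fib (S k))%nat.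
Proof.
  induction k as [k IH] using lt_wf_ind. destruct k as [|[|k]]; simpl; auto.
  specialize (IH k). simpl in IH. lia.
Qed.

Definition Lq (n : nat) : nat := length (q (3 * n + 1)).

Lemma Lq_pos n : (1 <= Lq n)%nat.
Proof. unfold Lq. rewrite q_length. replace (3 * n + 1)%nat with (S (3 * n)) by lia. apply fib_pos. Qed.

Lemma piVerts_length n : length (piVerts n) = S (4 * Lq n).
Proof.
  pose proof (Lq_pos n). unfold Lq in *. unfold piVerts, vertices, piWord. cbn [length].
  rewrite walk_length, removelast_firstn_len, length_firstn, !length_app. lia.
Qed.

Lemma nseg_eq n : nseg n = (4 * Lq n)%nat.
Proof. unfold nseg. rewrite piVerts_length. lia. Qed.

Lemma nseg_len n : length (piVerts n) = S (nseg n).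
Proof. rewrite nseg_eq, piVerts_length. reflexivity. Qed.

Definition vt n i : Z * Z := nth i (piVerts n) (0%Z, 0%Z).

(* after the first step and the first copy of [q_(3n+1)] the path reaches the
   vertex [Q_n = (P_(n+1), +-(P_n - 1))] *)
Lemma vertex_Q n : vt n (S (Lq n)) = (pell (S n), (sgn n * (pell n - 1))%Z).
Proof.
  unfold vt, piVerts, vertices. pose proof (Lq_pos n) as HL.
  assert (Hw : piWord n = q (3 * n + 1) ++ removelast (q (3 * n + 1) ++ q (3 * n + 1) ++ q (3 * n + 1))).
  { unfold piWord. apply removelast_app. intro E. apply (f_equal (@length _)) in E.
    rewrite !length_app in E. unfold Lq in *. cbn [length] in E. lia. }
  replace (S (Lq n)) with (S (S (Lq n - 1))) by lia. cbn [nth].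
  rewrite Hw, walk_app, app_nth1 by (rewrite walk_length; unfold Lq in *; lia).
  unfold Lq in *. rewrite walk_last by (intro E; rewrite E in HL; simpl in HL; lia).
  rewrite (fin_gen _ _ 0) by lia. cbn [fst]. destruct (q_endpoints n) as [_ [_ [D1 _]]].
  rewrite D1. unfold addZ2, rot. cbn -[pell Z.add Z.sub Z.mul]. f_equal; lia.
Qed.

Lemma vt_step n i : (S i < length (piVerts n))%nat -> exists k, vt n (S i) = addZ2 (vt n i) (dir k).
Proof.
  unfold vt, piVerts, vertices. intros Hi. destruct i as [|i].
  - exists 0%nat. reflexivity.
  - cbn [nth]. cbn [length] in Hi. generalize (piWord n) (1%Z, 0%Z) 0%nat i Hi.
    clear. induction l as [|c w IH]; intros p h i Hi. simpl in Hi; lia.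
    destruct i as [|i].
    + exists (turn c h). reflexivity.
    + cbn [walk]. cbn [walk length] in Hi. apply (IH _ _ i). simpl. lia.
Qed.

Lemma dir_unit k : (Z.abs (fst (dir k)) + Z.abs (snd (dir k)) = 1)%Z.
Proof. unfold dir. destruct (mod4_cases k) as [E|[E|[E|E]]]; rewrite E; reflexivity. Qed.

Lemma vt_norm_bound n i : (i < length (piVerts n))%nat ->
  (Z.abs (fst (vt n i)) + Z.abs (snd (vt n i)) <= Z.of_nat i)%Z.
Proof.
  induction i as [|i IH]; intros Hi.
  - reflexivity.
  - destruct (vt_step n i Hi) as [k E]. rewrite E. specialize (IH ltac:(lia)).
    pose proof (dir_unit k). unfold addZ2; cbn [fst snd]. rewrite Nat2Z.inj_succ. lia.
Qed.

Lemma vt_bound n i : (i < length (piVerts n))%nat ->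
  Rabs (IZR (fst (vt n i))) + Rabs (IZR (snd (vt n i))) <= INR (nseg n).
Proof.
  intros Hi. pose proof (vt_norm_bound n i Hi) as B.
  rewrite <- !abs_IZR, <- plus_IZR. apply Rle_trans with (IZR (Z.of_nat i)).
  apply IZR_le; auto. rewrite <- INR_IZR_INZ. apply le_INR. rewrite nseg_len in Hi. lia.
Qed.

(** * Intersections of a line with the polygon

    The line [x cos th + y sin th = rho] meets side [i]
    (from vertex [i] to vertex [i+1]) in its interior iff [rho] lies strictly
    between the projections [pv n th i] and [pv n th (S i)] of its endpoints.
    A line is generic when it passes through no vertex; for generic lines the
    intersection points correspond to the crossed sides, up to sides that are
    the same lattice segment. *)

Definition projZ (th : R) (p : Z * Z) : R := IZR (fst p) * cos th + IZR (snd p) * sin th.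
Definition projR (th : R) (z : R * R) : R := fst z * cos th + snd z * sin th.
Definition pv n th i := projZ th (vt n i).
Definition lo n th i := Rmin (pv n th i) (pv n th (S i)).
Definition hi n th i := Rmax (pv n th i) (pv n th (S i)).
Definition crossb n th rho i : bool := inside (lo n th i) (hi n th i) rho.

Definition Cset n th rho : list nat := filter (crossb n th rho) (seq 0 (nseg n)).

Definition generic n th rho : Prop := forall i, (i < length (piVerts n))%nat -> rho <> pv n th i.

Definition segR (a b : Z * Z) (s : R) : R * R :=
  (IZR (fst a) + s * (IZR (fst b) - IZR (fst a)), IZR (snd a) + s * (IZR (snd b) - IZR (snd a))).

Definition ptv n th rho i : R * R :=
  segR (vt n i) (vt n (S i)) ((rho - pv n th i) / (pv n th (S i) - pv n th i)).

Definition keyv n i : Key :=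
  ((Z.min (fst (vt n i)) (fst (vt n (S i))), Z.min (snd (vt n i)) (snd (vt n (S i)))),
   Z.eqb (snd (vt n i)) (snd (vt n (S i)))).
Definition e0 (K : Key) : Z * Z := (fst (fst K), snd (fst K)).
Definition e1 (K : Key) : Z * Z :=
  if snd K then ((fst (fst K) + 1)%Z, snd (fst K)) else (fst (fst K), (snd (fst K) + 1)%Z).

Lemma projR_seg th a b s : projR th (segR a b s) = projZ th a + s * (projZ th b - projZ th a).
Proof. unfold projR, segR, projZ; simpl. ring. Qed.

Lemma segR_rev a b s : segR b a (1 - s) = segR a b s.
Proof. unfold segR. simpl. f_equal; ring. Qed.

Lemma side_canon n i : (S i < length (piVerts n))%nat ->
  (vt n i = e0 (keyv n i) /\ vt n (S i) = e1 (keyv n i)) \/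
  (vt n i = e1 (keyv n i) /\ vt n (S i) = e0 (keyv n i)).
Proof.
  intros Hi. destruct (vt_step n i Hi) as [k E]. unfold keyv, e0, e1. rewrite E.
  destruct (vt n i) as [x y]. unfold dir, addZ2.
  destruct (mod4_cases k) as [F|[F|[F|F]]]; rewrite F; cbn [fst snd].
  all: match goal with |- context [Z.eqb ?a ?b] => destruct (Z.eqb_spec a b); try (exfalso; lia) end.
  - left. split; f_equal; lia.
  - left. split; f_equal; lia.
  - right. split; f_equal; lia.
  - right. split; f_equal; lia.
Qed.

Lemma IZR_small m : -1 < IZR m < 1 -> m = 0%Z.
Proof. intros [A B]. apply lt_IZR in A. apply lt_IZR in B. lia. Qed.

Lemma seg_canon_h K t : snd K = true -> segR (e0 K) (e1 K) t = (IZR (fst (fst K)) + t, IZR (snd (fst K))).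
Proof. intros H. unfold segR, e0, e1. rewrite H. simpl. rewrite plus_IZR. f_equal; ring. Qed.

Lemma seg_canon_v K t : snd K = false -> segR (e0 K) (e1 K) t = (IZR (fst (fst K)), IZR (snd (fst K)) + t).
Proof. intros H. unfold segR, e0, e1. rewrite H. simpl. rewrite plus_IZR. f_equal; ring. Qed.

Lemma lattice_segments_disjoint K K' t t' : 0 < t < 1 -> 0 < t' < 1 ->
  segR (e0 K) (e1 K) t = segR (e0 K') (e1 K') t' -> K = K'.
Proof.
  intros Ht Ht' E.
  destruct K as [[x y] b], K' as [[x' y'] b'].
  destruct b, b';
    [rewrite !seg_canon_h in E | rewrite seg_canon_h, seg_canon_v in E
    | rewrite seg_canon_v, seg_canon_h in E | rewrite !seg_canon_v in E]; auto;
    simpl in E; inversion E as [[E1 E2]].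
  - apply eq_IZR in E2. subst y'. assert (x - x' = 0)%Z by (apply IZR_small; rewrite minus_IZR; lra).
    f_equal. f_equal. lia.
  - exfalso. assert (x' - x = 0)%Z by (apply IZR_small; rewrite minus_IZR; lra).
    assert (IZR (x' - x) = 0) by (rewrite H; reflexivity). rewrite minus_IZR in H0. lra.
  - exfalso. assert (x - x' = 0)%Z by (apply IZR_small; rewrite minus_IZR; lra).
    assert (IZR (x - x') = 0) by (rewrite H; reflexivity). rewrite minus_IZR in H0. lra.
  - apply eq_IZR in E1. subst x'. assert (y - y' = 0)%Z by (apply IZR_small; rewrite minus_IZR; lra).
    f_equal. f_equal. lia.
Qed.

Lemma Cset_In n th rho i : In i (Cset n th rho) <-> (i < nseg n)%nat /\ crossb n th rho i = true.
Proof. unfold Cset. rewrite filter_In, in_seq. split; intros [A B]; split; auto; lia. Qed.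

Lemma crossb_param n th rho i : crossb n th rho i = true ->
  pv n th i <> pv n th (S i) /\ 0 < (rho - pv n th i) / (pv n th (S i) - pv n th i) < 1.
Proof.
  unfold crossb, lo, hi. rewrite inside_true. intros H.
  unfold Rmin, Rmax in H. destruct (Rle_dec (pv n th i) (pv n th (S i))).
  - split. intro; lra.
    split. apply Rdiv_lt_0_compat; lra. apply (Rmult_lt_reg_r (pv n th (S i) - pv n th i)). lra.
    unfold Rdiv. rewrite Rmult_assoc, Rinv_l by lra. lra.
  - split. intro; lra.
    replace ((rho - pv n th i) / (pv n th (S i) - pv n th i))
      with ((pv n th i - rho) / (pv n th i - pv n th (S i))) by (field; lra).
    split. apply Rdiv_lt_0_compat; lra. apply (Rmult_lt_reg_r (pv n th i - pv n th (S i))). lra.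
    unfold Rdiv. rewrite Rmult_assoc, Rinv_l by lra. lra.
Qed.

Lemma ptv_on_line n th rho i : crossb n th rho i = true -> projR th (ptv n th rho i) = rho.
Proof.
  intros H. destruct (crossb_param n th rho i H) as [Hne _]. unfold ptv. rewrite projR_seg.
  fold (pv n th i) (pv n th (S i)). field. lra.
Qed.

Lemma ptv_canon n th rho i : (i < nseg n)%nat -> crossb n th rho i = true ->
  exists t, 0 < t < 1 /\ ptv n th rho i = segR (e0 (keyv n i)) (e1 (keyv n i)) t /\
   projZ th (e0 (keyv n i)) <> projZ th (e1 (keyv n i)).
Proof.
  intros Hi H. destruct (crossb_param n th rho i H) as [Hne Hs].
  assert (Hl : (S i < length (piVerts n))%nat) by (rewrite nseg_len; lia).
  destruct (side_canon n i Hl) as [[A B]|[A B]].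
  - exists ((rho - pv n th i) / (pv n th (S i) - pv n th i)). split; auto.
    unfold ptv, pv in *. rewrite <- A, <- B. split; auto.
  - exists (1 - (rho - pv n th i) / (pv n th (S i) - pv n th i)). split. lra.
    unfold ptv, pv in *. rewrite <- A, <- B, segR_rev. split; auto.
Qed.

Lemma ptv_eq_iff_key n th rho i k : In i (Cset n th rho) -> In k (Cset n th rho) ->
  (ptv n th rho i = ptv n th rho k <-> keyv n i = keyv n k).
Proof.
  rewrite !Cset_In. intros [Hi Ci] [Hk Ck].
  destruct (ptv_canon n th rho i Hi Ci) as [t [Ht [Et Nt]]].
  destruct (ptv_canon n th rho k Hk Ck) as [t' [Ht' [Et' Nt']]].
  split.
  - intros Ep. rewrite Et, Et' in Ep. apply (lattice_segments_disjoint _ _ t t'); auto.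
  - intros Ek. pose proof (ptv_on_line n th rho i Ci) as L1. pose proof (ptv_on_line n th rho k Ck) as L2.
    rewrite Et in L1. rewrite Et' in L2. rewrite <- Ek in L2, Et'. rewrite Et, Et'.
    rewrite projR_seg in L1, L2. f_equal.
    apply (Rmult_eq_reg_r (projZ th (e1 (keyv n i)) - projZ th (e0 (keyv n i)))); lra.
Qed.

Lemma hits_generic n th rho : generic n th rho ->
  forall z, Hits n th rho z <-> exists i, In i (Cset n th rho) /\ z = ptv n th rho i.
Proof.
  intros G z.
  assert (HP : InPoly n z <-> exists i, (S i < length (piVerts n))%nat /\
                 exists s, 0 <= s <= 1 /\ z = segR (vt n i) (vt n (S i)) s)
    by (unfold InPoly, vtx, segR, vt; reflexivity).
  unfold Hits, OnLine. rewrite HP. fold (projR th z). split.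
  - intros [[i [Hi [s [Hs Ez]]]] L]. rewrite Ez, projR_seg in L. fold (pv n th i) (pv n th (S i)) in L.
    assert (A : rho <> pv n th i) by (apply G; lia).
    assert (B : rho <> pv n th (S i)) by (apply G; lia).
    assert (Hne : pv n th i <> pv n th (S i)) by (intro E; rewrite <- E in L, B; apply A; lra).
    assert (s0 : s <> 0) by (intro E; subst s; apply A; lra).
    assert (s1 : s <> 1) by (intro E; subst s; apply B; lra).
    exists i. split.
    + apply Cset_In. split. rewrite nseg_len in Hi; lia.
      unfold crossb, lo, hi. apply inside_true. unfold Rmin, Rmax.
      destruct (Rle_dec (pv n th i) (pv n th (S i))); split; nra.
    + rewrite Ez. unfold ptv. f_equal. rewrite <- L. field. intro E; apply Hne; lra.
  - intros [i [Hi ->]]. apply Cset_In in Hi. destruct Hi as [Hi C]. split.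
    + exists i. split. rewrite nseg_len; lia.
      exists ((rho - pv n th i) / (pv n th (S i) - pv n th i)).
      destruct (crossb_param n th rho i C) as [_ Hs]. split. lra. reflexivity.
    + apply ptv_on_line; auto.
Qed.

Lemma card_hits_generic n th rho j : generic n th rho ->
  (card_eq (Hits n th rho) j <-> j = dcount (keyv n) (Cset n th rho)).
Proof.
  intros G. apply (card_eq_dcount (keyv n) (ptv n th rho)).
  - intros; apply ptv_eq_iff_key; auto.
  - apply hits_generic; auto.
Qed.

Lemma meets_generic n th rho : generic n th rho -> (Meets n th rho <-> Cset n th rho <> []).
Proof.
  intros G. unfold Meets. split.
  - intros [z Hz]. apply (hits_generic n th rho G) in Hz. destruct Hz as [i [Hi _]].
    intro E; rewrite E in Hi; destruct Hi.
  - intros H. destruct (Cset n th rho) as [|i C] eqn:E. congruence.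
    exists (ptv n th rho i). apply (hits_generic n th rho G). exists i. rewrite E. simpl; auto.
Qed.

Lemma generic_off_vertices n th rho :
  ~ In rho (map (pv n th) (seq 0 (length (piVerts n)))) -> generic n th rho.
Proof. intros H i Hi E. apply H. subst. apply in_map. apply in_seq. lia. Qed.

Lemma crossing_between n th rho m : (m <= nseg n)%nat -> generic n th rho ->
  Rmin (pv n th 0) (pv n th m) < rho < Rmax (pv n th 0) (pv n th m) ->
  exists i, (i < m)%nat /\ crossb n th rho i = true.
Proof.
  intros Hm G. induction m as [|m IH]; intros H.
  - unfold Rmin, Rmax in H. destruct Rle_dec; lra.
  - assert (Gm : rho <> pv n th m) by (apply G; rewrite nseg_len; lia).
    assert (G0 : rho <> pv n th 0) by (apply G; rewrite nseg_len; lia).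
    destruct (Rlt_dec (Rmin (pv n th 0) (pv n th m)) rho) as [A|A];
    [destruct (Rlt_dec rho (Rmax (pv n th 0) (pv n th m))) as [B|B]|].
    + destruct (IH ltac:(lia) (conj A B)) as [i [Hi Ci]]. exists i; split; auto.
    + exists m. split. lia. unfold crossb, lo, hi. apply inside_true.
      unfold Rmin, Rmax in *. repeat destruct Rle_dec; lra.
    + exists m. split. lia. unfold crossb, lo, hi. apply inside_true.
      unfold Rmin, Rmax in *. repeat destruct Rle_dec; lra.
Qed.

(** * The inner integral over [rho] is Lipschitz in the direction [th]

    For a functional [F] of the set of crossed sides with values in [0,1], the
    inner integral [gF n F th] of [rho |-> F (Cset n th rho)] is Lipschitz in
    [th]: when [th] moves, [Cset n th rho] changes only for [rho] between the
    old and new position of some endpoint [lo]/[hi], and these move at speed at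
    most [nseg n].  Hence [gF n F] is continuous and integrable over [0, PI]. *)

Lemma lipschitz_of_deriv_bound (f f' : R -> R) :
  (forall c, derivable_pt_lim f c (f' c)) -> (forall c, Rabs (f' c) <= 1) ->
  forall a b, Rabs (f a - f b) <= Rabs (a - b).
Proof.
  intros Hd Hb.
  assert (K : forall a b, a < b -> Rabs (f a - f b) <= Rabs (a - b)).
  { intros a b H. destruct (MVT_cor2 f f' a b H (fun c _ => Hd c)) as [c [E _]].
    rewrite <- Rabs_Ropp, Ropp_minus_distr, E, Rabs_mult, <- (Rabs_Ropp (a - b)), Ropp_minus_distr.
    pose proof (Hb c). pose proof (Rabs_pos (b - a)). nra. }
  intros a b. destruct (Rtotal_order a b) as [H|[H|H]].
  - apply K; auto.
  - subst. rewrite !Rminus_diag, Rabs_R0. lra.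
  - rewrite (Rabs_minus_sym (f a)), (Rabs_minus_sym a). apply K; auto.
Qed.

Lemma sin_lip a b : Rabs (sin a - sin b) <= Rabs (a - b).
Proof.
  apply (lipschitz_of_deriv_bound sin cos derivable_pt_lim_sin).
  intros c. pose proof (COS_bound c). apply Rabs_le; lra.
Qed.

Lemma cos_lip a b : Rabs (cos a - cos b) <= Rabs (a - b).
Proof.
  apply (lipschitz_of_deriv_bound cos (fun x => - sin x) derivable_pt_lim_cos).
  intros c. pose proof (SIN_bound c). apply Rabs_le; lra.
Qed.

Lemma projZ_bound th p : Rabs (projZ th p) <= Rabs (IZR (fst p)) + Rabs (IZR (snd p)).
Proof.
  unfold projZ. eapply Rle_trans. apply Rabs_triang. rewrite !Rabs_mult.
  pose proof (COS_bound th). pose proof (SIN_bound th).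
  assert (Rabs (cos th) <= 1) by (apply Rabs_le; lra). assert (Rabs (sin th) <= 1) by (apply Rabs_le; lra).
  pose proof (Rabs_pos (IZR (fst p))). pose proof (Rabs_pos (IZR (snd p))). nra.
Qed.

Lemma projZ_lip th th' p :
  Rabs (projZ th p - projZ th' p) <= (Rabs (IZR (fst p)) + Rabs (IZR (snd p))) * Rabs (th - th').
Proof.
  unfold projZ.
  replace (IZR (fst p) * cos th + IZR (snd p) * sin th - (IZR (fst p) * cos th' + IZR (snd p) * sin th'))
    with (IZR (fst p) * (cos th - cos th') + IZR (snd p) * (sin th - sin th')) by ring.
  eapply Rle_trans. apply Rabs_triang. rewrite !Rabs_mult.
  pose proof (cos_lip th th'). pose proof (sin_lip th th').
  pose proof (Rabs_pos (IZR (fst p))). pose proof (Rabs_pos (IZR (snd p))). nra.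
Qed.

Lemma pv_bound n th i : (i < length (piVerts n))%nat -> Rabs (pv n th i) <= INR (nseg n).
Proof. intros. unfold pv. eapply Rle_trans. apply projZ_bound. apply vt_bound; auto. Qed.

Lemma pv_lip n th th' i : (i < length (piVerts n))%nat ->
  Rabs (pv n th i - pv n th' i) <= INR (nseg n) * Rabs (th - th').
Proof.
  intros. unfold pv. eapply Rle_trans. apply projZ_lip.
  apply Rmult_le_compat_r. apply Rabs_pos. apply vt_bound; auto.
Qed.

Lemma Rmin_lip a b a' b' : Rabs (Rmin a b - Rmin a' b') <= Rabs (a - a') + Rabs (b - b').
Proof. unfold Rmin. destruct (Rle_dec a b), (Rle_dec a' b'); unfold Rabs; repeat destruct Rcase_abs; lra. Qed.

Lemma Rmax_lip a b a' b' : Rabs (Rmax a b - Rmax a' b') <= Rabs (a - a') + Rabs (b - b').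
Proof. unfold Rmax. destruct (Rle_dec a b), (Rle_dec a' b'); unfold Rabs; repeat destruct Rcase_abs; lra. Qed.

Lemma lo_hi_bound n th i : (i < nseg n)%nat ->
  Rabs (lo n th i) <= INR (nseg n) /\ Rabs (hi n th i) <= INR (nseg n).
Proof.
  intros Hi. unfold lo, hi. pose proof (pv_bound n th i ltac:(rewrite nseg_len; lia)).
  pose proof (pv_bound n th (S i) ltac:(rewrite nseg_len; lia)).
  unfold Rmin, Rmax. destruct Rle_dec; auto.
Qed.

Lemma lo_hi_lip n th th' i : (i < nseg n)%nat ->
  Rabs (lo n th i - lo n th' i) <= 2 * INR (nseg n) * Rabs (th - th') /\
  Rabs (hi n th i - hi n th' i) <= 2 * INR (nseg n) * Rabs (th - th').
Proof.
  intros Hi. unfold lo, hi.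
  pose proof (pv_lip n th th' i ltac:(rewrite nseg_len; lia)).
  pose proof (pv_lip n th th' (S i) ltac:(rewrite nseg_len; lia)).
  pose proof (Rmin_lip (pv n th i) (pv n th (S i)) (pv n th' i) (pv n th' (S i))).
  pose proof (Rmax_lip (pv n th i) (pv n th (S i)) (pv n th' i) (pv n th' (S i))). lra.
Qed.

(** Integrability in [rho]: [rho |-> Cset n th rho] is a step function whose
    breakpoints are the [lo] and [hi] of the sides. *)

Definition breakpoints n th : list R := map (lo n th) (seq 0 (nseg n)) ++ map (hi n th) (seq 0 (nseg n)).

Lemma inside_stable a b x y : ~ (Rmin x y <= a <= Rmax x y) -> ~ (Rmin x y <= b <= Rmax x y) ->
  inside a b x = inside a b y.
Proof.
  intros Ha Hb. unfold inside, Rmin, Rmax in *.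
  destruct (Rle_dec x y); repeat destruct Rlt_dec; auto; exfalso; lra.
Qed.

Lemma Cset_stable n th x y : (forall c, In c (breakpoints n th) -> ~ (Rmin x y <= c <= Rmax x y)) ->
  Cset n th x = Cset n th y.
Proof.
  intros H. unfold Cset. apply filter_ext_in. intros i Hi. apply in_seq in Hi.
  unfold crossb. apply inside_stable; apply H; unfold breakpoints; apply in_or_app;
  [left|right]; apply in_map; apply in_seq; lia.
Qed.

Lemma ex_RInt_Cset n th (F : list nat -> R) A B : A <= B -> ex_RInt (fun rho => F (Cset n th rho)) A B.
Proof.
  intros H. apply (ex_RInt_stepfun (breakpoints n th)); auto.
  intros x y _ _ Hc. rewrite (Cset_stable n th x y); auto.
Qed.

Lemma ex_RInt_Cset2 n th th' (F : list nat -> list nat -> R) A B : A <= B ->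
  ex_RInt (fun rho => F (Cset n th rho) (Cset n th' rho)) A B.
Proof.
  intros H. apply (ex_RInt_stepfun (breakpoints n th ++ breakpoints n th')); auto. intros x y _ _ Hc.
  rewrite (Cset_stable n th x y), (Cset_stable n th' x y); auto;
    intros c Hc'; apply Hc; apply in_or_app; auto.
Qed.

Definition cl (u v x : R) : R := if Rle_dec (Rmin u v) x then if Rle_dec x (Rmax u v) then 1 else 0 else 0.

Lemma cl_nonneg u v x : 0 <= cl u v x.
Proof. unfold cl. repeat destruct Rle_dec; lra. Qed.

Lemma is_RInt_cl u v A B : A <= Rmin u v -> Rmax u v <= B -> is_RInt (cl u v) A B (Rabs (u - v)).
Proof.
  intros H1 H2. replace (Rabs (u - v)) with (Rmax u v - Rmin u v).
  2:{ unfold Rmax, Rmin, Rabs. destruct Rle_dec; destruct Rcase_abs; lra. }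
  apply is_RInt_indicator; auto. apply Rmin_Rmax.
  - intros x Hx. unfold cl. destruct Rle_dec; [|lra]. destruct Rle_dec; lra.
  - intros x Hx. unfold cl. destruct Rle_dec; [lra|]. reflexivity.
  - intros x Hx. unfold cl. destruct Rle_dec; [|reflexivity]. destruct Rle_dec; lra.
Qed.

Lemma cl_cover a b a' b' x : inside a b x <> inside a' b' x -> 1 <= cl a a' x + cl b b' x.
Proof.
  intros H. unfold cl, Rmin, Rmax, inside in *.
  repeat destruct Rle_dec; repeat destruct Rlt_dec; try congruence; lra.
Qed.

Lemma Cset_change_bound n th th' (F : list nat -> R) x : (forall C, 0 <= F C <= 1) ->
  Rabs (F (Cset n th x) - F (Cset n th' x)) <=
  sumR (nseg n) (fun i => cl (lo n th i) (lo n th' i) x + cl (hi n th i) (hi n th' i) x).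
Proof.
  intros HF.
  assert (Hpos : forall i, (i < nseg n)%nat ->
            0 <= cl (lo n th i) (lo n th' i) x + cl (hi n th i) (hi n th' i) x).
  { intros i _. pose proof (cl_nonneg (lo n th i) (lo n th' i) x).
    pose proof (cl_nonneg (hi n th i) (hi n th' i) x). lra. }
  destruct (forallb (fun i => Bool.eqb (crossb n th x i) (crossb n th' x i)) (seq 0 (nseg n))) eqn:E.
  - assert (Cset n th x = Cset n th' x).
    { unfold Cset. apply filter_ext_in. intros i Hi. rewrite forallb_forall in E.
      specialize (E i Hi). apply Bool.eqb_prop in E. auto. }
    rewrite H, Rminus_diag, Rabs_R0. apply sumR_nonneg. exact Hpos.
  - apply Bool.not_true_iff_false in E. rewrite forallb_forall in E.
    destruct (Classical_Pred_Type.not_all_ex_not _ _ E) as [i Hi].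
    apply Classical_Prop.imply_to_and in Hi. destruct Hi as [Hi Hne]. apply in_seq in Hi.
    assert (Hne' : crossb n th x i <> crossb n th' x i) by (intro E3; rewrite E3, Bool.eqb_reflx in Hne; auto).
    eapply Rle_trans. 2:{ apply (sumR_ge_term _ _ i). exact Hpos. lia. }
    pose proof (cl_cover _ _ _ _ x Hne').
    pose proof (HF (Cset n th x)). pose proof (HF (Cset n th' x)).
    assert (Rabs (F (Cset n th x) - F (Cset n th' x)) <= 1) by (apply Rabs_le; lra). lra.
Qed.

Lemma rhoMax_gt n : INR (nseg n) < rhoMax n.
Proof. unfold rhoMax. lra. Qed.

Definition gF n (F : list nat -> R) th : R :=
  RInt (fun rho => F (Cset n th rho)) (- rhoMax n) (rhoMax n).

Lemma is_RInt_gF n F th : is_RInt (fun rho => F (Cset n th rho)) (- rhoMax n) (rhoMax n) (gF n F th).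
Proof.
  apply (RInt_correct (fun rho => F (Cset n th rho))). apply ex_RInt_Cset.
  pose proof (rhoMax_gt n). pose proof (pos_INR (nseg n)). lra.
Qed.

Lemma gF_lip n F th th' : (forall C, 0 <= F C <= 1) ->
  Rabs (gF n F th - gF n F th') <= 4 * INR (nseg n) * INR (nseg n) * Rabs (th - th').
Proof.
  intros HF. set (Rm := rhoMax n). pose proof (rhoMax_gt n). pose proof (pos_INR (nseg n)).
  set (G := fun x => sumR (nseg n) (fun i => cl (lo n th i) (lo n th' i) x + cl (hi n th i) (hi n th' i) x)).
  assert (Hd : is_RInt (fun rho => F (Cset n th rho) - F (Cset n th' rho)) (- Rm) Rm (gF n F th - gF n F th'))
    by (apply is_RInt_Rminus; apply is_RInt_gF).
  assert (Ea : ex_RInt (fun rho => Rabs (F (Cset n th rho) - F (Cset n th' rho))) (- Rm) Rm)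
    by (apply (ex_RInt_Cset2 n th th' (fun C C' => Rabs (F C - F C'))); unfold Rm; lra).
  assert (Hs : is_RInt G (- Rm) Rm
     (sumR (nseg n) (fun i => Rabs (lo n th i - lo n th' i) + Rabs (hi n th i - hi n th' i)))).
  { apply (is_RInt_sumR (fun i x => cl (lo n th i) (lo n th' i) x + cl (hi n th i) (hi n th' i) x)).
    intros i Hi. pose proof (lo_hi_bound n th i Hi). pose proof (lo_hi_bound n th' i Hi).
    apply is_RInt_Rplus; apply is_RInt_cl; unfold Rmin, Rmax, Rm in *;
      destruct Rle_dec; unfold Rabs in *; repeat destruct Rcase_abs; lra. }
  apply Rle_trans with (sumR (nseg n) (fun i => Rabs (lo n th i - lo n th' i) + Rabs (hi n th i - hi n th' i))).
  - rewrite <- (is_RInt_unique _ _ _ _ Hd).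
    eapply Rle_trans. apply abs_RInt_le. unfold Rm; lra. exists (gF n F th - gF n F th'); auto.
    apply (is_RInt_le_values (fun t => Rabs (F (Cset n th t) - F (Cset n th' t))) G (- Rm) Rm); auto.
    unfold Rm; lra. apply (RInt_correct (fun t => Rabs (F (Cset n th t) - F (Cset n th' t)))). auto.
    intros x _. apply Cset_change_bound; auto.
  - eapply Rle_trans. apply (sumR_le _ _ (fun _ => 4 * INR (nseg n) * Rabs (th - th'))).
    intros i Hi. pose proof (lo_hi_lip n th th' i Hi). lra.
    rewrite sumR_const. lra.
Qed.

Lemma ex_RInt_gF n F a b : (forall C, 0 <= F C <= 1) -> ex_RInt (gF n F) a b.
Proof.
  intros HF. apply (ex_RInt_continuous (V := R_CompleteNormedModule)). intros th _.
  apply (proj2 (filterlim_locally _ _)). intros eps.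
  set (L := 4 * INR (nseg n) * INR (nseg n) + 1).
  assert (HL : 0 < L) by (unfold L; pose proof (pos_INR (nseg n)); nra).
  assert (Hd : 0 < eps / L) by (apply Rdiv_lt_0_compat; [apply cond_pos|auto]).
  exists (mkposreal _ Hd). intros y Hy.
  unfold ball in *; cbn [pos] in *. unfold AbsRing_ball, abs, minus, plus, opp in *; cbn [pos] in *.
  pose proof (gF_lip n F y th HF).
  assert (Rabs (y - th) < eps / L) by exact Hy.
  assert (4 * INR (nseg n) * INR (nseg n) * Rabs (y - th) <= L * Rabs (y - th)).
  { unfold L. rewrite Rmult_plus_distr_r, Rmult_1_l. pose proof (Rabs_pos (y - th)). lra. }
  assert (L * Rabs (y - th) < eps).
  { apply (Rmult_lt_compat_l L) in H0; auto. replace (L * (eps / L)) with (pos eps) in H0 by (field; lra). lra. }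
  change (Rabs (gF n F y - gF n F th) < eps). lra.
Qed.

(* indicator that a line crossing the sides [C] meets [Pi_n] in exactly [j]
   points, resp. meets it at all *)
Definition FJ n j (C : list nat) : R := if Nat.eqb (dcount (keyv n) C) j then 1 else 0.
Definition FM (C : list nat) : R := match C with [] => 0 | _ => 1 end.

Lemma FJ_01 n j C : 0 <= FJ n j C <= 1.
Proof. unfold FJ. destruct Nat.eqb; lra. Qed.

Lemma FM_01 C : 0 <= FM C <= 1.
Proof. unfold FM. destruct C; lra. Qed.

(* a set of lines that, for generic lines, is described through the crossed
   sides has as measure the integral of the corresponding inner integral: the
   non-generic lines of a direction are finitely many *)
Lemma lineMeasure_gF n (P : R -> R -> Prop) (F : list nat -> R) :
  (forall C, 0 <= F C <= 1) ->
  (forall th rho, generic n th rho -> Defs.ind (P th rho) = F (Cset n th rho)) ->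
  lineMeasure n P = RInt (gF n F) 0 PI.
Proof.
  intros HF HP. pose proof (rhoMax_gt n). pose proof (pos_INR (nseg n)).
  assert (Inner : forall th, Defs.RInt (fun rho => Defs.ind (P th rho)) (- rhoMax n) (rhoMax n) = gF n F th).
  { intros th. apply Defs_RInt_eq. lra.
    apply (is_RInt_ext_but_finite _ (fun rho => F (Cset n th rho)) _ _ _
             (map (pv n th) (seq 0 (length (piVerts n))))).
    lra. apply is_RInt_gF. intros x Hx. apply HP, generic_off_vertices, Hx. }
  unfold lineMeasure. rewrite (functional_extensionality _ _ Inner).
  apply Defs_RInt_eq. apply PI_RGT_0. apply (RInt_correct (gF n F)), ex_RInt_gF, HF.
Qed.

Definition AJ n j := RInt (gF n (FJ n j)) 0 PI.
Definition MM n := RInt (gF n FM) 0 PI.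

Lemma prob_eq n j : prob n j = AJ n j / MM n.
Proof.
  unfold prob. rewrite (lineMeasure_gF n _ (FJ n j)), (lineMeasure_gF n _ FM); auto using FJ_01, FM_01.
  - intros th rho G. unfold Defs.ind, FM.
    destruct (excluded_middle_informative _) as [c|c]; rewrite (meets_generic n th rho G) in c;
      destruct (Cset n th rho); auto; exfalso; apply c; [reflexivity|discriminate].
  - intros th rho G. unfold Defs.ind, FJ.
    destruct (excluded_middle_informative _) as [c|c]; rewrite (card_hits_generic n th rho j G) in c.
    + rewrite <- c, Nat.eqb_refl. reflexivity.
    + destruct (Nat.eqb_spec (dcount (keyv n) (Cset n th rho)) j); auto. congruence.
Qed.

Lemma is_RInt_AJ n j : is_RInt (gF n (FJ n j)) 0 PI (AJ n j).
Proof. apply (RInt_correct (gF n (FJ n j))), ex_RInt_gF, FJ_01. Qed.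

Lemma AJ_nonneg n j : 0 <= AJ n j.
Proof.
  pose proof PI_RGT_0. pose proof (rhoMax_gt n). pose proof (pos_INR (nseg n)).
  pose proof (is_RInt_Rconst 0 PI 0) as Z0. rewrite Rmult_0_r in Z0.
  apply (is_RInt_le_values (fun _ => 0) (gF n (FJ n j)) 0 PI); auto using is_RInt_AJ. lra.
  intros th _. pose proof (is_RInt_Rconst (- rhoMax n) (rhoMax n) 0) as Z1. rewrite Rmult_0_r in Z1.
  apply (is_RInt_le_values (fun _ => 0) (fun rho => FJ n j (Cset n th rho)) (- rhoMax n) (rhoMax n));
    auto using is_RInt_gF. lra. intros; apply FJ_01.
Qed.

Lemma Cset_length n th rho : (length (Cset n th rho) <= nseg n)%nat.
Proof. unfold Cset. eapply Nat.le_trans. apply filter_length_le. rewrite length_seq. lia. Qed.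

(* the events "exactly j points", [1 <= j <= nseg n], partition "meets" *)
Lemma sum_AJ n : sumR (nseg n) (fun i => AJ n (S i)) = MM n.
Proof.
  assert (Hsplit : forall C, (length C <= nseg n)%nat -> sumR (nseg n) (fun i => FJ n (S i) C) = FM C).
  { intros C HC. unfold FJ. rewrite sumR_indicator. pose proof (dcount_le (keyv n) C).
    destruct (dcount (keyv n) C) eqn:E.
    - apply dcount_zero in E. rewrite E. reflexivity.
    - replace (1 <=? S n0)%nat with true by (symmetry; apply Nat.leb_le; lia).
      replace (S n0 <=? nseg n)%nat with true by (symmetry; apply Nat.leb_le; lia). simpl.
      destruct C; auto. discriminate. }
  assert (Hinner : forall th, sumR (nseg n) (fun i => gF n (FJ n (S i)) th) = gF n FM th).
  { intros th. symmetry. apply is_RInt_unique.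
    apply (is_RInt_ext_open (fun x => sumR (nseg n) (fun i => FJ n (S i) (Cset n th x)))).
    pose proof (rhoMax_gt n). pose proof (pos_INR (nseg n)). lra.
    intros x _. apply Hsplit, Cset_length.
    apply (is_RInt_sumR (fun i x => FJ n (S i) (Cset n th x))). intros; apply is_RInt_gF. }
  unfold MM. symmetry. apply is_RInt_unique.
  apply (is_RInt_ext_open (fun th => sumR (nseg n) (fun i => gF n (FJ n (S i)) th))).
  pose proof PI_RGT_0; lra. intros x _. apply Hinner.
  apply (is_RInt_sumR (fun i th => gF n (FJ n (S i)) th)). intros. apply is_RInt_AJ.
Qed.

(** * Crofton bound on the mean number of intersection points *)

(* each side is a unit segment, so its projection has length at most 1 *)
Lemma side_projection_le1 n th i : (i < nseg n)%nat -> hi n th i - lo n th i <= 1.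
Proof.
  intros Hi. destruct (vt_step n i ltac:(rewrite nseg_len; lia)) as [k E].
  assert (pv n th (S i) = pv n th i + projZ th (dir k)).
  { unfold pv. rewrite E. unfold projZ, addZ2. simpl. rewrite !plus_IZR. ring. }
  pose proof (projZ_bound th (dir k)). pose proof (dir_unit k).
  assert (Rabs (IZR (fst (dir k))) + Rabs (IZR (snd (dir k))) = 1).
  { rewrite <- !abs_IZR, <- plus_IZR, H1. reflexivity. }
  unfold hi, lo, Rmax, Rmin. destruct Rle_dec; unfold Rabs in *; destruct Rcase_abs; lra.
Qed.

Lemma is_RInt_crossb n th i : (i < nseg n)%nat ->
  is_RInt (fun rho => if crossb n th rho i then 1 else 0) (- rhoMax n) (rhoMax n) (hi n th i - lo n th i).
Proof.
  intros Hi. destruct (lo_hi_bound n th i Hi). pose proof (rhoMax_gt n).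
  apply is_RInt_indicator.
  - unfold Rabs in *; repeat destruct Rcase_abs; lra.
  - unfold lo, hi. apply Rmin_Rmax.
  - unfold Rabs in *; repeat destruct Rcase_abs; lra.
  - intros x Hx. unfold crossb. replace (inside (lo n th i) (hi n th i) x) with true
      by (symmetry; apply inside_true; lra). reflexivity.
  - intros x Hx. unfold crossb. destruct (inside _ _ x) eqn:E; auto. apply inside_true in E. lra.
  - intros x Hx. unfold crossb. destruct (inside _ _ x) eqn:E; auto. apply inside_true in E. lra.
Qed.

(* in a fixed direction, [sum_j j * (measure of lines with j points)] is at most
   the number of crossings, whose integral is the total projected length *)
Lemma inner_mean_bound n th : sumR (nseg n) (fun i => INR (S i) * gF n (FJ n (S i)) th) <= INR (nseg n).
Proof.
  pose proof (rhoMax_gt n). pose proof (pos_INR (nseg n)).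
  apply Rle_trans with (sumR (nseg n) (fun i => hi n th i - lo n th i)).
  - apply (is_RInt_le_values (fun x => sumR (nseg n) (fun i => INR (S i) * FJ n (S i) (Cset n th x)))
                    (fun x => sumR (nseg n) (fun i => if crossb n th x i then 1 else 0)) (- rhoMax n) (rhoMax n)).
    + lra.
    + apply (is_RInt_sumR (fun i x => INR (S i) * FJ n (S i) (Cset n th x))). intros.
      apply is_RInt_Rmult_l, is_RInt_gF.
    + apply (is_RInt_sumR (fun i x => if crossb n th x i then 1 else 0)). intros. apply is_RInt_crossb; auto.
    + intros x _. unfold FJ. rewrite sumR_weighted_indicator, <- length_filter_sumR. fold (Cset n th x).
      pose proof (dcount_le (keyv n) (Cset n th x)). pose proof (Cset_length n th x).
      replace (dcount (keyv n) (Cset n th x) <=? nseg n)%nat with true by (symmetry; apply Nat.leb_le; lia).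
      apply le_INR; auto.
  - eapply Rle_trans. apply (sumR_le _ _ (fun _ => 1)). intros; apply side_projection_le1; auto.
    rewrite sumR_const. lra.
Qed.

Lemma mean_AJ n : sumR (nseg n) (fun i => INR (S i) * AJ n (S i)) <= PI * INR (nseg n).
Proof.
  pose proof PI_RGT_0.
  apply (is_RInt_le_values (fun th => sumR (nseg n) (fun i => INR (S i) * gF n (FJ n (S i)) th))
                           (fun _ => INR (nseg n)) 0 PI).
  - lra.
  - apply (is_RInt_sumR (fun i th => INR (S i) * gF n (FJ n (S i)) th)). intros.
    apply is_RInt_Rmult_l, is_RInt_AJ.
  - replace (PI * INR (nseg n)) with ((PI - 0) * INR (nseg n)) by ring. apply is_RInt_Rconst.
  - intros; apply inner_mean_bound.
Qed.

(** * Lower bound on the measure of the lines meeting [Pi_n] *)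

Lemma is_RInt_projection_sq X Y :
  is_RInt (fun th => (X * cos th + Y * sin th) ^ 2) 0 PI (PI * (X ^ 2 + Y ^ 2) / 2).
Proof.
  set (F := fun th => (X^2 + Y^2) * th / 2 + (X^2 - Y^2) * sin th * cos th / 2 + X * Y * (sin th)^2).
  assert (E : PI * (X ^ 2 + Y ^ 2) / 2 = minus (F PI) (F 0)).
  { unfold F, minus, plus, opp; simpl. rewrite sin_PI, cos_PI, sin_0, cos_0. field. }
  rewrite E. apply (is_RInt_derive F).
  - intros x _. unfold F. auto_derive. auto.
    pose proof (sin2_cos2 x). unfold Rsqr in H. nra.
  - intros x _. apply (ex_derive_continuous (fun th => (X * cos th + Y * sin th) ^ 2)). auto_derive. auto.
Qed.

(* in direction [th], every generic line strictly between the projections of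
   vertex 0 (the origin) and vertex [m] meets [Pi_n] *)
Lemma inner_meets_lower n th m : (m <= nseg n)%nat -> Rabs (pv n th m) <= gF n FM th.
Proof.
  intros Hm. set (P := pv n th m). set (ps := map (pv n th) (seq 0 (length (piVerts n)))).
  pose proof (rhoMax_gt n). pose proof (pos_INR (nseg n)).
  assert (HP : Rabs P <= INR (nseg n)) by (apply pv_bound; rewrite nseg_len; lia).
  assert (Hpv0 : pv n th 0 = 0) by (unfold pv, projZ; simpl; ring).
  set (between := fun x => if Rlt_dec (Rmin 0 P) x then if Rlt_dec x (Rmax 0 P) then 1 else 0 else 0).
  set (k := fun x => if in_dec Req_EM_T x ps then 0 else between x).
  apply (is_RInt_le_values k (fun rho => FM (Cset n th rho)) (- rhoMax n) (rhoMax n)).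
  - lra.
  - apply (is_RInt_ext_but_finite _ between _ _ _ ps).
    lra.
    replace (Rabs P) with (Rmax 0 P - Rmin 0 P) by (unfold Rmax, Rmin, Rabs; destruct Rle_dec; destruct Rcase_abs; lra).
    apply is_RInt_indicator; unfold between.
    + unfold Rmin, Rabs in *; destruct Rle_dec; destruct Rcase_abs; lra.
    + apply Rmin_Rmax.
    + unfold Rmax, Rabs in *; destruct Rle_dec; destruct Rcase_abs; lra.
    + intros x Hx. destruct Rlt_dec; [|lra]. destruct Rlt_dec; [|lra]. reflexivity.
    + intros x Hx. destruct Rlt_dec; [lra|]. reflexivity.
    + intros x Hx. destruct Rlt_dec; [|reflexivity]. destruct Rlt_dec; [lra|reflexivity].
    + intros x Hx. unfold k. destruct in_dec; [contradiction|reflexivity].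
  - apply is_RInt_gF.
  - intros x _. unfold k, between. destruct in_dec as [|Hn]. apply FM_01.
    destruct Rlt_dec as [A|A]; [destruct Rlt_dec as [B|B]|]; try apply FM_01.
    apply generic_off_vertices in Hn. rewrite <- Hpv0 in A, B.
    destruct (crossing_between n th x m Hm Hn (conj A B)) as [i [Hi Ci]].
    destruct (Cset n th x) eqn:E.
    + assert (In i (Cset n th x)) by (apply Cset_In; split; auto; lia). rewrite E in H1; destruct H1.
    + simpl; lra.
Qed.

(* integrating over the directions: [|pv| >= pv^2 / (|X| + |Y|)] *)
Lemma MM_lower_vertex n m : (m <= nseg n)%nat ->
  let X := IZR (fst (vt n m)) in let Y := IZR (snd (vt n m)) in
  0 < Rabs X + Rabs Y -> PI * (X ^ 2 + Y ^ 2) / 2 / (Rabs X + Rabs Y) <= MM n.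
Proof.
  intros Hm X Y HD. pose proof PI_RGT_0. unfold MM.
  apply (is_RInt_le_values (fun th => / (Rabs X + Rabs Y) * (X * cos th + Y * sin th) ^ 2) (gF n FM) 0 PI).
  - lra.
  - replace (PI * (X ^ 2 + Y ^ 2) / 2 / (Rabs X + Rabs Y))
      with (/ (Rabs X + Rabs Y) * (PI * (X ^ 2 + Y ^ 2) / 2)) by (field; lra).
    apply is_RInt_Rmult_l, is_RInt_projection_sq.
  - apply (RInt_correct (gF n FM)). apply ex_RInt_gF. apply FM_01.
  - intros th _. eapply Rle_trans. 2: apply (inner_meets_lower n th m Hm).
    change (X * cos th + Y * sin th) with (pv n th m).
    assert (B : Rabs (pv n th m) <= Rabs X + Rabs Y) by apply projZ_bound.
    pose proof (Rabs_pos (pv n th m)).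
    rewrite <- (pow2_abs (pv n th m)).
    apply (Rmult_le_reg_l (Rabs X + Rabs Y)); auto. rewrite <- Rmult_assoc, Rinv_r by lra.
    rewrite Rmult_1_l. replace (Rabs (pv n th m) ^ 2) with (Rabs (pv n th m) * Rabs (pv n th m)) by ring.
    apply Rmult_le_compat_r; auto.
Qed.

Lemma pell_mono k : (0 <= pell k /\ pell k <= pell (S k) /\ 1 <= pell (S k))%Z.
Proof.
  induction k. simpl; lia. destruct IHk as [A [B C]].
  change (pell (S (S k))) with (2 * pell (S k) + pell k)%Z. lia.
Qed.

(* applied to the vertex [Q_n = (P_(n+1), +-(P_n - 1))] with [|P_n - 1| <= P_(n+1)] *)
Lemma MM_pell n : PI * IZR (pell (S n)) / 4 <= MM n.
Proof.
  pose proof PI_RGT_0. set (m := S (Lq n)).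
  assert (Hm : (m <= nseg n)%nat) by (unfold m; rewrite nseg_eq; pose proof (Lq_pos n); lia).
  pose proof (MM_lower_vertex n m Hm) as H1. cbv zeta in H1.
  unfold m in H1. rewrite vertex_Q in H1. cbn [fst snd] in H1.
  destruct (pell_mono n) as [A [B C]].
  set (X := IZR (pell (S n))) in *. set (Y := IZR (sgn n * (pell n - 1))) in *.
  assert (HX : 1 <= X) by (apply IZR_le; auto).
  assert (HY : Rabs Y <= X).
  { unfold Y, X. rewrite <- abs_IZR. apply IZR_le. unfold sgn. destruct (Nat.even n); lia. }
  rewrite (Rabs_right X) in H1 by lra. pose proof (Rabs_pos Y).
  specialize (H1 ltac:(lra)).
  eapply Rle_trans; [|apply H1].
  apply (Rmult_le_reg_r (X + Rabs Y)). lra. unfold Rdiv.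
  rewrite (Rmult_assoc (PI * (X ^ 2 + Y ^ 2) * / 2)), Rinv_l, Rmult_1_r by lra.
  rewrite <- (pow2_abs Y).
  assert (X * (X + Rabs Y) <= 2 * (X ^ 2 + Rabs Y ^ 2)) by nra.
  replace (PI * X * / 4 * (X + Rabs Y)) with (PI / 4 * (X * (X + Rabs Y))) by field.
  replace (PI * (X ^ 2 + Rabs Y ^ 2) * / 2) with (PI / 4 * (2 * (X ^ 2 + Rabs Y ^ 2))) by field.
  apply Rmult_le_compat_l; lra.
Qed.

(** * Entropy of a distribution with bounded mean *)

Lemma ln_le_sub1 y : 0 < y -> ln y <= y - 1.
Proof. intros H. pose proof (exp_ineq1_le (ln y)). rewrite exp_ln in H0; lra. Qed.

Lemma gibbs p q : 0 <= p -> 0 < q -> - plogp p <= - p * ln q + q - p.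
Proof.
  intros Hp Hq. unfold plogp. destruct (Req_EM_T p 0). subst; lra.
  assert (0 < p) by lra.
  pose proof (ln_le_sub1 (q / p) ltac:(apply Rdiv_lt_0_compat; lra)).
  unfold Rdiv in H0. rewrite ln_mult, ln_Rinv in H0 by (auto; apply Rinv_0_lt_compat; lra).
  apply (Rmult_le_compat_l p) in H0; [|lra].
  replace (p * (q * / p - 1)) with (q - p) in H0 by (field; lra). lra.
Qed.

Lemma neg_ln_geometric mu i : 2 <= mu ->
  - ln (/ mu * (1 - / mu) ^ i) <= ln mu + 2 * INR i / mu.
Proof.
  intros Hmu. assert (Hi : 0 < / mu <= / 2) by (split; [apply Rinv_0_lt_compat|apply Rinv_le_contravar]; lra).
  set (a := 1 - / mu). assert (Ha : 1/2 <= a < 1) by (unfold a; lra).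
  rewrite ln_mult, ln_pow, ln_Rinv by (try apply Rinv_0_lt_compat; try apply pow_lt; lra).
  assert (- ln a <= 2 / mu).
  { pose proof (ln_le_sub1 (/ a) ltac:(apply Rinv_0_lt_compat; lra)). rewrite ln_Rinv in H by lra.
    assert (/ a - 1 <= 2 / mu).
    { unfold a. apply (Rmult_le_reg_r (1 - / mu)). lra.
      replace ((/ (1 - / mu) - 1) * (1 - / mu)) with (/ mu) by (field; split; lra).
      unfold Rdiv. nra. }
    lra. }
  pose proof (pos_INR i). unfold Rdiv in *. nra.
Qed.

Lemma entropy_bound N (p : nat -> R) mu : 2 <= mu -> (forall i, (i < N)%nat -> 0 <= p i) ->
  sumR N p = 1 -> sumR N (fun i => INR (S i) * p i) <= mu ->
  - sumR N (fun i => plogp (p i)) <= ln mu + 2.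
Proof.
  intros Hmu Hp Hs Hm.
  assert (Hinv : 0 < / mu) by (apply Rinv_0_lt_compat; lra).
  set (q := fun i : nat => / mu * (1 - / mu) ^ i).
  assert (Hq : forall i, 0 < q i).
  { intros. unfold q. apply Rmult_lt_0_compat. lra. apply pow_lt.
    assert (/ mu <= / 2) by (apply Rinv_le_contravar; lra). lra. }
  assert (Step : forall i, (i < N)%nat ->
            - plogp (p i) <= p i * ln mu + 2 / mu * (INR (S i) * p i) + q i - p i).
  { intros i Hii. eapply Rle_trans. apply gibbs; auto. pose proof (Hp i Hii).
    pose proof (neg_ln_geometric mu i Hmu). fold (q i) in H0.
    assert (p i * (- ln (q i)) <= p i * (ln mu + 2 * INR i / mu)) by (apply Rmult_le_compat_l; auto).
    assert (0 <= 2 / mu * p i) by (unfold Rdiv; apply Rmult_le_pos; lra).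
    replace (2 / mu * (INR (S i) * p i)) with (p i * (2 * INR i / mu) + 2 / mu * p i) by (rewrite S_INR; field; lra).
    rewrite Rmult_plus_distr_l in H1. replace (- p i * ln (q i)) with (p i * (- ln (q i))) by ring.
    lra. }
  assert (Hq_sum : sumR N q <= 1).
  { rewrite (sumR_ext N q (fun i => (1 - (1 - / mu)) * (1 - / mu) ^ i))
      by (intros; unfold q; f_equal; ring).
    rewrite sumR_geometric. assert (0 <= (1 - / mu) ^ N).
    { apply pow_le. assert (/ mu <= / 2) by (apply Rinv_le_contravar; lra). lra. }
    lra. }
  replace (- sumR N (fun i => plogp (p i))) with (sumR N (fun i => - plogp (p i)))
    by (clear; induction N; cbn [sumR]; [ring|rewrite IHN; ring]).
  eapply Rle_trans. apply (sumR_le N _ _ Step).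
  replace (sumR N (fun i => p i * ln mu + 2 / mu * (INR (S i) * p i) + q i - p i))
    with (ln mu * sumR N p + 2 / mu * sumR N (fun i => INR (S i) * p i) + sumR N q - sumR N p)
    by (clear; induction N; cbn [sumR]; [ring|rewrite <- IHN; ring]).
  rewrite Hs.
  assert (2 / mu * sumR N (fun i => INR (S i) * p i) <= 2 / mu * mu)
    by (apply Rmult_le_compat_l; auto; unfold Rdiv; lra).
  replace (2 / mu * mu) with 2 in H by (field; lra). lra.
Qed.

Definition phi := (1 + sqrt 5) / 2.

Lemma phi_sq : phi ^ 2 = phi + 1.
Proof.
  unfold phi. replace (((1 + sqrt 5) / 2) ^ 2) with ((1 + 2 * sqrt 5 + sqrt 5 * sqrt 5) / 4) by field.
  rewrite sqrt_sqrt by lra. field.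
Qed.

Lemma phi_ge1 : 1 <= phi.
Proof. unfold phi. pose proof (sqrt_pos 5). pose proof (sqrt_sqrt 5 ltac:(lra)). nra. Qed.

Lemma phi_cube : phi ^ 3 = 2 + sqrt 5.
Proof.
  replace (phi ^ 3) with (phi * phi ^ 2) by ring. rewrite phi_sq.
  replace (phi * (phi + 1)) with (phi ^ 2 + phi) by ring. rewrite phi_sq. unfold phi. field.
Qed.

Lemma fib_upper k : INR (fib k) <= phi ^ k.
Proof.
  induction k as [k IH] using lt_wf_ind. pose proof phi_ge1. destruct k as [|[|k]].
  - simpl; lra.
  - simpl; lra.
  - change (fib (S (S k))) with (fib (S k) + fib k)%nat.
    rewrite plus_INR. pose proof (IH (S k) ltac:(lia)). pose proof (IH k ltac:(lia)).
    replace (phi ^ S (S k)) with (phi ^ k * phi ^ 2) by (rewrite <- pow_add; f_equal; lia).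
    rewrite phi_sq. replace (phi ^ S k) with (phi ^ k * phi) in H0 by (simpl; ring). nra.
Qed.

Lemma pell_lower k : (1 + sqrt 2) ^ k / 2 <= IZR (pell (S k)).
Proof.
  set (r := 1 + sqrt 2). assert (Hr2 : r ^ 2 = 2 * r + 1).
  { unfold r. pose proof (sqrt_sqrt 2 ltac:(lra)). nra. }
  assert (Hr : 0 < r) by (unfold r; pose proof (sqrt_pos 2); lra).
  assert (Hr3 : r <= 3). { unfold r. pose proof (sqrt_sqrt 2 ltac:(lra)). pose proof (sqrt_pos 2). nra. }
  induction k as [k IH] using lt_wf_ind. destruct k as [|[|k]].
  - simpl. lra.
  - simpl. lra.
  - change (pell (S (S (S k)))) with (2 * pell (S (S k)) + pell (S k))%Z.
    rewrite plus_IZR, mult_IZR. pose proof (IH (S k) ltac:(lia)). pose proof (IH k ltac:(lia)).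
    replace (r ^ S (S k)) with (r ^ k * r ^ 2) by (rewrite <- pow_add; f_equal; lia).
    rewrite Hr2. replace (r ^ S k) with (r ^ k * r) in H by (simpl; ring).
    pose proof (pow_lt r k Hr). nra.
Qed.

(* Gibbs with mean [E J <= PI N / M <= 4 N / P_(n+1)] *)
Lemma entropy_mean_bound n : entropy n <= ln (4 * INR (nseg n) / IZR (pell (S n)) + 2) + 2.
Proof.
  pose proof PI_RGT_0. destruct (pell_mono n) as [_ [_ HX]].
  set (X := IZR (pell (S n))). assert (HX1 : 1 <= X) by (apply IZR_le; auto).
  pose proof (MM_pell n) as HM. fold X in HM.
  assert (HM0 : 0 < MM n).
  { assert (0 < PI * X / 4) by (apply Rdiv_lt_0_compat; [apply Rmult_lt_0_compat|]; lra). lra. }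
  pose proof (pos_INR (nseg n)).
  assert (0 <= 4 * INR (nseg n) / X) by (apply Rdiv_le_0_compat; lra).
  unfold entropy. apply (entropy_bound (nseg n) (fun i => prob n (S i))).
  - lra.
  - intros i _. rewrite prob_eq. apply Rdiv_le_0_compat; auto. apply AJ_nonneg.
  - rewrite (sumR_ext _ _ (fun i => AJ n (S i) * / MM n)) by (intros; apply prob_eq).
    rewrite sumR_scal_r, sum_AJ. field; lra.
  - rewrite (sumR_ext _ _ (fun i => (INR (S i) * AJ n (S i)) * / MM n))
      by (intros; rewrite prob_eq; unfold Rdiv; ring).
    rewrite sumR_scal_r. pose proof (mean_AJ n).
    apply Rle_trans with (PI * INR (nseg n) * / MM n).
    { apply Rmult_le_compat_r; auto. left; apply Rinv_0_lt_compat; auto. }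
    apply Rle_trans with (4 * INR (nseg n) / X); [|lra].
    apply (Rmult_le_reg_r (MM n)); auto. rewrite Rmult_assoc, Rinv_l, Rmult_1_r by lra.
    apply Rle_trans with (4 * INR (nseg n) / X * (PI * X / 4)).
    + right. field. lra.
    + apply Rmult_le_compat_l; auto.
Qed.

(* [4 N / P_(n+1) + 2 <= 34 phi ((2 + sqrt 5) / (1 + sqrt 2))^n], using
   [N = 4 fib (3n+1) <= 4 phi^(3n+1)] *)
Lemma mean_growth n :
  4 * INR (nseg n) / IZR (pell (S n)) + 2 <= 34 * (phi * (phi ^ 3 / (1 + sqrt 2)) ^ n).
Proof.
  set (r := 1 + sqrt 2). set (s := phi ^ 3).
  assert (Hr : 1 <= r) by (unfold r; pose proof (sqrt_pos 2); lra).
  assert (Hsr : r <= s).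
  { unfold s, r. rewrite phi_cube. assert (sqrt 2 <= sqrt 5) by (apply sqrt_le_1_alt; lra). lra. }
  pose proof phi_ge1.
  assert (Hq : 1 <= s / r).
  { apply (Rmult_le_reg_r r). lra. unfold Rdiv. rewrite Rmult_assoc, Rinv_l, Rmult_1_l, Rmult_1_r by lra. auto. }
  assert (HT : 1 <= (s / r) ^ n) by (apply pow_R1_Rle; auto).
  assert (Hrn : 0 < r ^ n) by (apply pow_lt; lra).
  pose proof (pell_lower n) as PL. fold r in PL.
  pose proof (fib_upper (3 * n + 1)) as FB. rewrite <- q_length in FB. fold (Lq n) in FB.
  rewrite nseg_eq, mult_INR in *. simpl (INR 4).
  set (X := IZR (pell (S n))) in *.
  assert (HX : 0 < X) by (assert (0 < r ^ n / 2) by lra; lra).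
  assert (E : phi ^ (3 * n + 1) = phi * s ^ n) by (unfold s; rewrite <- pow_mult, pow_add; simpl; ring).
  rewrite E in FB.
  assert (4 * (4 * INR (Lq n)) / X <= 32 * (phi * (s / r) ^ n)).
  { apply (Rmult_le_reg_r X); auto. unfold Rdiv. rewrite Rmult_assoc, Rinv_l, Rmult_1_r by lra.
    rewrite Rpow_mult_distr, pow_inv.
    assert (K : s ^ n * / r ^ n * X >= s ^ n * / r ^ n * (r ^ n / 2)).
    { apply Rle_ge, Rmult_le_compat_l; auto. apply Rmult_le_pos. apply pow_le; lra.
      left; apply Rinv_0_lt_compat; auto. }
    replace (s ^ n * / r ^ n * (r ^ n / 2)) with (s ^ n / 2) in K by (field; lra).
    assert (K2 : 0 <= phi * s ^ n) by (apply Rmult_le_pos; [lra|apply pow_le; lra]).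
    replace (32 * (phi * (s ^ n * / r ^ n)) * X) with (32 * phi * (s ^ n * / r ^ n * X)) by ring.
    apply Rle_trans with (32 * phi * (s ^ n / 2)). nra.
    apply Rmult_le_compat_l; lra. }
  assert (2 <= 2 * (phi * (s / r) ^ n)) by nra.
  lra.
Qed.

Definition entropy_const : R := ln 34 + ln phi + 2.

Lemma entropy_linear_bound n :
  entropy n <= entropy_const + INR n * ln ((2 + sqrt 5) / (1 + sqrt 2)).
Proof.
  rewrite <- phi_cube. set (r := 1 + sqrt 2). pose proof phi_ge1.
  assert (Hr : 0 < r) by (unfold r; pose proof (sqrt_pos 2); lra).
  assert (Hq : 0 < phi ^ 3 / r) by (apply Rdiv_lt_0_compat; auto; apply pow_lt; lra).
  destruct (pell_mono n) as [_ [_ HX]].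
  assert (1 <= IZR (pell (S n))) by (apply IZR_le; auto). pose proof (pos_INR (nseg n)).
  assert (0 < 4 * INR (nseg n) / IZR (pell (S n)) + 2).
  { assert (0 <= 4 * INR (nseg n) / IZR (pell (S n))) by (apply Rdiv_le_0_compat; lra). lra. }
  eapply Rle_trans. apply entropy_mean_bound.
  eapply Rle_trans. apply Rplus_le_compat_r. apply ln_le; auto. apply mean_growth. fold r.
  rewrite ln_mult, ln_mult, ln_pow by (try lra; try apply Rmult_lt_0_compat; try lra; apply pow_lt; lra).
  unfold entropy_const. lra.
Qed.

Lemma limsup_div_of_linear_bound (a : nat -> R) c L :
  (forall n, a n <= c + INR n * L) ->
  forall eps, 0 < eps -> exists N, forall n, (N <= n)%nat -> a n / INR n <= L + eps.
Proof.
  intros Ha eps Heps.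
  destruct (archimed (Rabs c / eps)) as [Hup _].
  assert (H0 : 0 <= Rabs c / eps) by (apply Rdiv_le_0_compat; [apply Rabs_pos|lra]).
  exists (S (Z.to_nat (up (Rabs c / eps)))). intros n Hn.
  assert (Hn0 : 0 < INR n) by (apply lt_0_INR; lia).
  assert (HN : Rabs c / eps < INR n).
  { apply Rlt_le_trans with (IZR (up (Rabs c / eps))); auto.
    rewrite <- (Z2Nat.id (up (Rabs c / eps))) by (apply le_IZR; lra).
    rewrite <- INR_IZR_INZ. apply le_INR. lia. }
  assert (Hc : c <= eps * INR n).
  { apply (Rmult_lt_compat_r eps) in HN; auto. unfold Rdiv in HN.
    rewrite Rmult_assoc, Rinv_l, Rmult_1_r in HN by lra. pose proof (Rle_abs c). lra. }
  apply (Rmult_le_reg_r (INR n)); auto. unfold Rdiv. rewrite Rmult_assoc, Rinv_l, Rmult_1_r by lra.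
  pose proof (Ha n). lra.
Qed.

Theorem theorem3 :
  forall eps : R, 0 < eps ->
    exists N : nat, forall n : nat, (N <= n)%nat ->
      entropy n / INR n <= ln ((2 + sqrt 5) / (1 + sqrt 2)) + eps.
Proof.
  exact (limsup_div_of_linear_bound entropy entropy_const _ entropy_linear_bound).
Qed.
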